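(* For every positive integer $k$: (i) $\mathrm{Cl}_k(\pi/3)$ lies in the $\mathbb{Q}$-linear span of $S^{o}_{k,1}$; (ii) $\mathrm{Gl}_k(\pi/3)$ lies in the $\mathbb{Q}$-linear span of $S^{e}_{k,1}$ (which equals $S^e_{k,0}=\{\pi^k\}$).
   Context: $\mathrm{Li}_k(z)=\sum_{m\ge1}z^m/m^k$ (for $k=1$, $\mathrm{Li}_1(z)=-\log(1-z)$). $\mathrm{Cl}_k(\sigma)=\mathrm{Im}\,\mathrm{Li}_k(e^{i\sigma})$ if $k$ is even and $\mathrm{Re}\,\mathrm{Li}_k(e^{i\sigma})$ if $k$ is odd; $\mathrm{Gl}_k(\sigma)=\mathrm{Re}\,\mathrm{Li}_k(e^{i\sigma})$ if $k$ even and $\mathrm{Im}\,\mathrm{Li}_k(e^{i\sigma})$ if $k$ odd. $A(\theta)=\log|2\sin(\theta/2)|$; for $k_u\ge2$, $\mathrm{SLs}(k_1,\dots,k_n)=\int_0^{\pi/3}\int_0^{\theta_n}\cdots\int_0^{\theta_2}\prod_{u=1}^n(\theta_u-\pi/3)^{k_u-2}A(\theta_u)\,d\theta_1\cdots d\theta_n$, $\mathrm{SLs}(\emptyset)=1$. For $k,d\ge0$: $S^o_{k,d}=\{\pi^m\mathrm{SLs}(k_1,\dots,k_n): m+k_1+\dots+k_n=k,\ 0\le n\le d,\ n\text{ odd},\ m\ge0,\ k_i\ge2\}$ and $S^e_{k,d}$ is defined the same way with $n$ even. *)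

From Stdlib Require Import Reals QArith Qreals.
From Coquelicot Require Import Coquelicot.
Open Scope R_scope.

(* Real and imaginary parts of Li_k(e^{i sigma}) = sum_{m>=1} e^{i m sigma}/m^k,
   as limits of the partial sums (Coquelicot [Series]; index shifted so m = j+1). *)
Definition ReLi (k : nat) (sigma : R) : R :=
  Series (fun j : nat => cos (INR (S j) * sigma) / (INR (S j)) ^ k).
Definition ImLi (k : nat) (sigma : R) : R :=
  Series (fun j : nat => sin (INR (S j) * sigma) / (INR (S j)) ^ k).

Definition Cl (k : nat) (sigma : R) : R :=
  if Nat.even k then ImLi k sigma else ReLi k sigma.
Definition Gl (k : nat) (sigma : R) : R :=
  if Nat.even k then ReLi k sigma else ImLi k sigma.

Definition Afun (theta : R) : R := ln (Rabs (2 * sin (theta / 2))).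

Definition SLs1 (k1 : nat) : R :=
  RInt_gen (fun theta => (theta - PI / 3) ^ (k1 - 2) * Afun theta)
           (at_right 0) (at_point (PI / 3)).

(* Write a = pi/3.  Integrating (t - a)^n cos (m t) and (t - a)^n sin (m t) over [0, a] by
   parts and summing against m^-e expresses both moment series as a nonzero rational multiple
   of Im Li_w(e^ia) or of zeta(w) - Re Li_w(e^ia), w = n + e + 1, plus terms (-a)^j zeta(w')
   with w' < w.  For e = 1 the sums can instead be taken under the integral with the
   Dirichlet kernel and the Riemann-Lebesgue lemma: sum cos (m t) / m = - A(t) turns the
   cosine series into - SLs(n + 2), and sum sin (m t) / m = (pi - t) / 2 makes the sine series
   a rational multiple of pi^(n + 2).  As cos (m a) only depends on m mod 6,
   Re Li_k(e^ia) = (1 - 2^(1-k)) (1 - 3^(1-k)) zeta(k) / 2, so by induction on the weight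
   zeta(k) lies in the span of the SLs values for k odd and in Q pi^k for k even; the same
   then holds for Cl_k(a) and Gl_k(a). *)

From Stdlib Require Import Reals QArith Qreals Lia Lra.
From Coquelicot Require Import Coquelicot.
Open Scope R_scope.

(* Coquelicot states these for abstract modules; the instances on [R] let [rewrite],
   [ring] and [field] see [Rplus] and [Rmult] directly. *)

Lemma sum_n_m_R0 n m : sum_n_m (fun _ => 0) n m = 0.
Proof. exact (sum_n_m_const_zero (G := R_AbelianMonoid) n m). Qed.

Lemma sum_n_m_Rplus (u v : nat -> R) n m :
  sum_n_m (fun i => u i + v i) n m = sum_n_m u n m + sum_n_m v n m.
Proof. exact (sum_n_m_plus u v n m). Qed.

Lemma sum_n_m_Rmult_l r (u : nat -> R) n m :
  sum_n_m (fun i => r * u i) n m = r * sum_n_m u n m.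
Proof. exact (sum_n_m_mult_l r u n m). Qed.

Lemma sum_n_Rsucc (f : nat -> R) N : sum_n f (S N) = sum_n f N + f (S N).
Proof. exact (sum_Sn f N). Qed.

Lemma sum_n_Rplus (u v : nat -> R) N : sum_n (fun j => u j + v j) N = sum_n u N + sum_n v N.
Proof. exact (sum_n_m_Rplus u v 0 N). Qed.

Lemma sum_n_Rmult_l r (u : nat -> R) N : sum_n (fun j => r * u j) N = r * sum_n u N.
Proof. exact (sum_n_m_Rmult_l r u 0 N). Qed.

Lemma sum_n_Rext (u v : nat -> R) N : (forall j, u j = v j) -> sum_n u N = sum_n v N.
Proof. intros Huv; exact (sum_n_ext u v N Huv). Qed.

Lemma sum_n_Rminus (u v : nat -> R) N : sum_n (fun j => u j - v j) N = sum_n u N - sum_n v N.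
Proof.
  unfold Rminus; rewrite <- (Rmult_1_l (sum_n v N)), Ropp_mult_distr_l.
  rewrite <- sum_n_Rmult_l, <- sum_n_Rplus; apply sum_n_Rext; intros; ring.
Qed.

Lemma is_series_iff_is_lim_seq (a : nat -> R) (l : R) :
  is_series a l <-> is_lim_seq (sum_n a) l.
Proof. split; intros H; exact H. Qed.

Lemma is_series_Rext (a b : nat -> R) (l : R) :
  (forall n, a n = b n) -> is_series a l -> is_series b l.
Proof. exact (is_series_ext a b l). Qed.

Lemma is_series_Rplus a b la lb : is_series a la -> is_series b lb ->
  is_series (fun n => a n + b n) (la + lb).
Proof. exact (is_series_plus a b la lb). Qed.

Lemma is_series_Rscal c a la : is_series a la -> is_series (fun n => c * a n) (c * la).
Proof. exact (is_series_scal c a la). Qed.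

Lemma ex_series_Rle (a b : nat -> R) :
  (forall n, Rabs (a n) <= b n) -> ex_series b -> ex_series a.
Proof. exact (ex_series_le (K := R_AbsRing) (V := R_CompleteNormedModule) a b). Qed.

Lemma continuous_Rmult (f g : R -> R) x :
  continuous f x -> continuous g x -> continuous (fun y => f y * g y) x.
Proof. exact (continuous_mult (K := R_AbsRing) f g x). Qed.

Lemma continuous_of_ex_derive (f : R -> R) x : ex_derive f x -> continuous f x.
Proof. exact (ex_derive_continuous (K := R_AbsRing) (V := R_NormedModule) f x). Qed.

Lemma ex_RInt_continuous_le (f : R -> R) lo hi : lo <= hi ->
  (forall x, lo <= x <= hi -> continuous f x) -> ex_RInt f lo hi.
Proof.
  intros Hl Hc; apply (ex_RInt_continuous (V := R_CompleteNormedModule)); intros z Hz.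
  rewrite Rmin_left, Rmax_right in Hz by lra; auto.
Qed.

Lemma RInt_Rext (f g : R -> R) lo hi :
  (forall x, Rmin lo hi < x < Rmax lo hi -> f x = g x) -> RInt f lo hi = RInt g lo hi.
Proof. exact (RInt_ext (V := R_CompleteNormedModule) f g lo hi). Qed.

Lemma RInt_Rplus (f g : R -> R) lo hi : ex_RInt f lo hi -> ex_RInt g lo hi ->
  RInt (fun x => f x + g x) lo hi = RInt f lo hi + RInt g lo hi.
Proof. exact (RInt_plus (V := R_CompleteNormedModule) f g lo hi). Qed.

Lemma RInt_Rminus (f g : R -> R) lo hi : ex_RInt f lo hi -> ex_RInt g lo hi ->
  RInt (fun x => f x - g x) lo hi = RInt f lo hi - RInt g lo hi.
Proof. exact (RInt_minus (V := R_CompleteNormedModule) f g lo hi). Qed.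

Lemma RInt_Rscal (f : R -> R) c lo hi :
  ex_RInt f lo hi -> RInt (fun x => c * f x) lo hi = c * RInt f lo hi.
Proof. exact (RInt_scal (V := R_CompleteNormedModule) f lo hi c). Qed.

(** * Integrals and the Riemann-Lebesgue lemma *)

Lemma RInt_is_derive (F f : R -> R) lo hi : lo <= hi ->
  (forall x, lo <= x <= hi -> is_derive F x (f x)) ->
  (forall x, lo <= x <= hi -> continuous f x) -> RInt f lo hi = F hi - F lo.
Proof.
  intros Hl Hd Hc; apply is_RInt_unique, (is_RInt_derive (V := R_CompleteNormedModule));
    intros x Hx; rewrite Rmin_left, Rmax_right in Hx by lra; auto.
Qed.

Lemma RInt_by_parts (f df g dg : R -> R) lo hi : lo <= hi ->
  (forall x, lo <= x <= hi -> is_derive f x (df x)) ->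
  (forall x, lo <= x <= hi -> is_derive g x (dg x)) ->
  (forall x, lo <= x <= hi -> continuous df x) ->
  (forall x, lo <= x <= hi -> continuous dg x) ->
  RInt (fun t => f t * dg t) lo hi = f hi * g hi - f lo * g lo - RInt (fun t => df t * g t) lo hi.
Proof.
  intros Hl Hf Hg Hdf Hdg.
  assert (Hfc : forall x, lo <= x <= hi -> continuous f x)
    by (intros x Hx; apply continuous_of_ex_derive; eexists; apply Hf, Hx).
  assert (Hgc : forall x, lo <= x <= hi -> continuous g x)
    by (intros x Hx; apply continuous_of_ex_derive; eexists; apply Hg, Hx).
  assert (Hsum : RInt (fun t => df t * g t + f t * dg t) lo hi = f hi * g hi - f lo * g lo).
  { apply (RInt_is_derive (fun t => f t * g t)); [exact Hl| |].
    - intros x Hx; apply (is_derive_mult f g); [apply Hf, Hx|apply Hg, Hx|intros; apply Rmult_comm].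
    - intros x Hx; apply (continuous_plus (V := R_NormedModule));
        apply continuous_Rmult; auto. }
  rewrite RInt_Rplus in Hsum; [lra| |];
    apply ex_RInt_continuous_le; [exact Hl| |exact Hl|];
    intros x Hx; apply continuous_Rmult; auto.
Qed.

Lemma RInt_sum_n (f : nat -> R -> R) N lo hi : (forall j, ex_RInt (f j) lo hi) ->
  RInt (fun x => sum_n (fun j => f j x) N) lo hi = sum_n (fun j => RInt (f j) lo hi) N.
Proof.
  intros Hf; induction N as [|N IH].
  - rewrite sum_O; apply RInt_Rext; intros; rewrite sum_O; reflexivity.
  - assert (Hex : ex_RInt (fun x => sum_n (fun j => f j x) N) lo hi).
    { clear IH; induction N as [|N IH].
      - apply (ex_RInt_ext (f 0%nat)); [intros; rewrite sum_O; reflexivity|apply Hf].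
      - apply (ex_RInt_ext (fun x => sum_n (fun j => f j x) N + f (S N) x));
          [intros; rewrite sum_Sn; reflexivity|apply (ex_RInt_plus (V := R_NormedModule)); auto]. }
    rewrite sum_Sn, <- IH; unfold plus; simpl; rewrite <- RInt_Rplus by auto.
    apply RInt_Rext; intros; apply sum_n_Rsucc.
Qed.

Lemma continuous_bounded (f : R -> R) lo hi : lo <= hi ->
  (forall x, lo <= x <= hi -> continuous f x) -> exists B, forall x, lo <= x <= hi -> Rabs (f x) <= B.
Proof.
  intros Hl Hc; destruct (continuity_ab_maj (fun x => Rabs (f x)) lo hi Hl) as [xm [HB _]].
  - intros x Hx; apply continuity_pt_filterlim, continuous_Rabs_comp, Hc, Hx.
  - exists (Rabs (f xm)); exact HB.
Qed.

Lemma continuous_cos_affine m p x : continuous (fun t => cos (m * t + p)) x.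
Proof. apply continuous_of_ex_derive; auto_derive; exact I. Qed.

Lemma continuous_cos_scal m x : continuous (fun t => cos (m * t)) x.
Proof. apply continuous_of_ex_derive; auto_derive; exact I. Qed.

Lemma continuous_sin_scal m x : continuous (fun t => sin (m * t)) x.
Proof. apply continuous_of_ex_derive; auto_derive; exact I. Qed.

Lemma is_derive_sin_div m x : m <> 0 -> is_derive (fun t => sin (m * t) / m) x (cos (m * x)).
Proof. intros Hm; auto_derive; [exact I|field; exact Hm]. Qed.

Lemma is_derive_cos_div m x : m <> 0 -> is_derive (fun t => - cos (m * t) / m) x (sin (m * x)).
Proof. intros Hm; auto_derive; [exact I|field; exact Hm]. Qed.

Lemma RInt_cos_half_period_shift (f : R -> R) b c M phi : 0 < M -> b + PI / M <= c ->
  (forall x, b <= x <= c -> continuous f x) ->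
  2 * RInt (fun t => f t * cos (M * t + phi)) b c =
    RInt (fun t => (f t - f (t + PI / M)) * cos (M * t + phi)) b (c - PI / M)
    + RInt (fun t => f t * cos (M * t + phi)) (c - PI / M) c
    - RInt (fun t => f (t + PI / M) * cos (M * t + phi)) (b - PI / M) b.
Proof.
  intros HM Hbc Hf; set (tau := PI / M) in *.
  assert (Htau : 0 < tau) by (apply Rdiv_lt_0_compat; [apply PI_RGT_0|exact HM]).
  set (g := fun t => f t * cos (M * t + phi)).
  set (h := fun t => f (t + tau) * cos (M * t + phi)).
  assert (Hg : forall lo hi, b <= lo <= hi -> hi <= c -> ex_RInt g lo hi).
  { intros lo hi Hlo Hhi; apply ex_RInt_continuous_le; [lra|intros x Hx].
    apply continuous_Rmult; [apply Hf; lra|apply continuous_cos_affine]. }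
  assert (Hh : forall lo hi, b - tau <= lo <= hi -> hi <= c - tau -> ex_RInt h lo hi).
  { intros lo hi Hlo Hhi; apply ex_RInt_continuous_le; [lra|intros x Hx].
    apply continuous_Rmult; [|apply continuous_cos_affine].
    apply (continuous_comp (fun u => u + tau) f);
      [apply continuous_of_ex_derive; auto_derive; exact I|apply Hf; lra]. }
  (* [cos] changes sign over half a period: the substitution [t = u + tau] gives [- h]. *)
  assert (Hsub : RInt g b c = - RInt h (b - tau) (c - tau)).
  { assert (E := RInt_comp_lin g 1 tau (b - tau) (c - tau)).
    replace (1 * (b - tau) + tau) with b in E by ring.
    replace (1 * (c - tau) + tau) with c in E by ring.
    rewrite <- E by (apply Hg; lra).
    rewrite <- (RInt_opp (V := R_CompleteNormedModule)) by (apply Hh; lra).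
    apply RInt_Rext; intros x _; unfold g, h, scal, opp; simpl; unfold mult; simpl.
    replace (M * (1 * x + tau) + phi) with (M * x + phi + PI) by (unfold tau; field; lra).
    rewrite neg_cos; replace (1 * x + tau) with (x + tau) by ring; ring. }
  assert (Eg : RInt g b c = RInt g b (c - tau) + RInt g (c - tau) c).
  { symmetry; apply (RInt_Chasles g); apply Hg; lra. }
  assert (Eh : RInt h (b - tau) (c - tau) = RInt h (b - tau) b + RInt h b (c - tau)).
  { symmetry; apply (RInt_Chasles h); apply Hh; lra. }
  rewrite (RInt_Rext (fun t => (f t - f (t + tau)) * cos (M * t + phi)) (fun t => g t - h t))
    by (intros; unfold g, h; ring).
  rewrite RInt_Rminus by (apply Hg || apply Hh; lra).
  fold g; fold h; lra.
Qed.

Lemma RInt_cos_oscillation_bound (f : R -> R) b c M phi eps B : 0 < M -> b + PI / M <= c ->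
  (forall x, b <= x <= c -> continuous f x) ->
  (forall x, b <= x <= c -> Rabs (f x) <= B) ->
  (forall x, b <= x <= c - PI / M -> Rabs (f x - f (x + PI / M)) <= eps) ->
  2 * Rabs (RInt (fun t => f t * cos (M * t + phi)) b c) <= (c - b) * eps + 2 * (PI / M) * B.
Proof.
  intros HM Hbc Hf HB Heps.
  assert (Htau : 0 < PI / M) by (apply Rdiv_lt_0_compat; [apply PI_RGT_0|exact HM]).
  assert (Heps0 : 0 <= eps) by (eapply Rle_trans; [apply Rabs_pos|apply (Heps b)]; lra).
  set (tau := PI / M) in *.
  assert (Hcos : forall t, Rabs (cos (M * t + phi)) <= 1) by (intros; apply Rabs_le, COS_bound).
  assert (Hint : forall (F : R -> R) lo hi K, b - tau <= lo <= hi -> hi <= c ->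
    (forall t, lo <= t <= hi -> continuous F t /\ Rabs (F t) <= K) ->
    Rabs (RInt (fun t => F t * cos (M * t + phi)) lo hi) <= (hi - lo) * K).
  { intros F lo hi K Hlo Hhi HF; apply abs_RInt_le_const; [lra| |].
    - apply ex_RInt_continuous_le; [lra|intros t Ht].
      apply continuous_Rmult; [apply HF, Ht|apply continuous_cos_affine].
    - intros t Ht; rewrite Rabs_mult, <- (Rmult_1_r K).
      apply Rmult_le_compat; [apply Rabs_pos|apply Rabs_pos|apply HF, Ht|apply Hcos]. }
  assert (Hshift : forall x, b - tau <= x <= c - tau -> continuous (fun t => f (t + tau)) x).
  { intros x Hx; apply (continuous_comp (fun u => u + tau) f);
      [apply continuous_of_ex_derive; auto_derive; exact I|apply Hf; lra]. }
  rewrite <- (Rabs_pos_eq 2) at 1 by lra; rewrite <- Rabs_mult.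
  rewrite RInt_cos_half_period_shift by assumption; fold tau.
  assert (H1 := Hint (fun t => f t - f (t + tau)) b (c - tau) eps ltac:(lra) ltac:(lra)).
  assert (H2 := Hint f (c - tau) c B ltac:(lra) ltac:(lra)).
  assert (H3 := Hint (fun t => f (t + tau)) (b - tau) b B ltac:(lra) ltac:(lra)).
  eapply Rle_trans; [apply Rabs_triang|rewrite Rabs_Ropp].
  eapply Rle_trans; [apply Rplus_le_compat_r, Rabs_triang|].
  assert ((c - tau - b) * eps <= (c - b) * eps) by (apply Rmult_le_compat_r; lra).
  enough (Rabs (RInt (fun t => (f t - f (t + tau)) * cos (M * t + phi)) b (c - tau)) <= (c - tau - b) * eps /\
          Rabs (RInt (fun t => f t * cos (M * t + phi)) (c - tau) c) <= (c - (c - tau)) * B /\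
          Rabs (RInt (fun t => f (t + tau) * cos (M * t + phi)) (b - tau) b) <= (b - (b - tau)) * B) by lra.
  split; [|split]; [apply H1|apply H2|apply H3]; intros t Ht; split.
  - apply (continuous_minus (V := R_NormedModule)); [apply Hf|apply Hshift]; lra.
  - apply Heps; lra.
  - apply Hf; lra.
  - apply HB; lra.
  - apply Hshift; lra.
  - apply HB; lra.
Qed.

Lemma RInt_cos_high_frequency (f : R -> R) b c phi (eps : posreal) : b < c ->
  (forall x, b <= x <= c -> continuous f x) ->
  exists tau0, 0 < tau0 /\ forall M, 0 < M -> PI / M < tau0 ->
    Rabs (RInt (fun t => f t * cos (M * t + phi)) b c) < eps.
Proof.
  intros Hbc Hf; pose proof (cond_pos eps) as Heps.
  destruct (continuous_bounded f b c) as [B HB]; [lra|exact Hf|].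
  assert (HB0 : 0 <= B) by (eapply Rle_trans; [apply Rabs_pos|apply (HB b)]; lra).
  set (eps1 := eps / (2 * (c - b + 1))).
  assert (Heps1 : 0 < eps1) by (apply Rdiv_lt_0_compat; lra).
  destruct (Heine_cor2 (fun x Hx => proj2 (continuity_pt_filterlim f x) (Hf x Hx))
              (mkposreal _ Heps1)) as [delta Hdelta]; simpl in Hdelta.
  set (tau1 := eps / (4 * (B + 1))).
  assert (Htau1 : 0 < tau1) by (apply Rdiv_lt_0_compat; lra).
  exists (Rmin (Rmin delta (c - b)) tau1); split.
  { repeat apply Rmin_pos; [apply cond_pos|lra|exact Htau1]. }
  intros M HM Htau.
  assert (Hpos : 0 < PI / M) by (apply Rdiv_lt_0_compat; [apply PI_RGT_0|exact HM]).
  pose proof (Rmin_l delta (c - b)); pose proof (Rmin_r delta (c - b)).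
  pose proof (Rmin_l (Rmin delta (c - b)) tau1); pose proof (Rmin_r (Rmin delta (c - b)) tau1).
  assert (Hbound := RInt_cos_oscillation_bound f b c M phi eps1 B HM ltac:(lra) Hf HB).
  assert (Hosc : (c - b) * eps1 < eps / 2).
  { unfold eps1; apply (Rmult_lt_reg_r (2 * (c - b + 1))); [lra|field_simplify; nra]. }
  assert (Hends : 2 * (PI / M) * B <= eps / 2).
  { apply (Rle_trans _ (2 * tau1 * B)); [apply Rmult_le_compat_r; lra|].
    unfold tau1; apply (Rmult_le_reg_r (B + 1)); [lra|field_simplify; nra]. }
  enough (2 * Rabs (RInt (fun t => f t * cos (M * t + phi)) b c) < eps) by lra.
  eapply Rle_lt_trans; [apply Hbound|lra].
  intros x Hx; apply Rlt_le, Hdelta; try lra.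
  replace (x - (x + PI / M)) with (- (PI / M)) by ring.
  rewrite Rabs_Ropp, Rabs_pos_eq; lra.
Qed.

Lemma Riemann_Lebesgue_cos (f : R -> R) (M : nat -> R) b c phi : b < c ->
  (forall x, b <= x <= c -> continuous f x) ->
  (forall N, 0 < M N) -> is_lim_seq M p_infty ->
  is_lim_seq (fun N => RInt (fun t => f t * cos (M N * t + phi)) b c) 0.
Proof.
  intros Hbc Hf HM HMlim; apply is_lim_seq_spec; intros eps.
  destruct (RInt_cos_high_frequency f b c phi eps Hbc Hf) as [tau0 [Htau0 Hsmall]].
  assert (Hhalf : is_lim_seq (fun N => PI / M N) 0).
  { replace (Finite 0) with (Rbar_mult PI 0) by (simpl; f_equal; ring).
    apply (is_lim_seq_scal_l (fun N => / M N) PI 0).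
    replace (Finite 0) with (Rbar_inv p_infty) by reflexivity.
    apply is_lim_seq_inv; [exact HMlim|discriminate]. }
  apply is_lim_seq_spec in Hhalf; destruct (Hhalf (mkposreal _ Htau0)) as [N0 HN0].
  exists N0; intros N HN; specialize (HN0 N HN); simpl in HN0; rewrite Rminus_0_r in *.
  apply Hsmall; [apply HM|].
  eapply Rle_lt_trans; [apply Rle_abs|exact HN0].
Qed.

Lemma INR_S_pos j : 0 < INR (S j).
Proof. apply lt_0_INR; lia. Qed.

Lemma INR_S_neq0 j : INR (S j) <> 0.
Proof. apply Rgt_not_eq, INR_S_pos. Qed.

Lemma is_lim_seq_inv_INR_S : is_lim_seq (fun j => / INR (S j)) 0.
Proof.
  apply (is_lim_seq_incr_1 (fun j => / INR j) 0).
  replace (Finite 0) with (Rbar_inv p_infty) by reflexivity.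
  apply is_lim_seq_inv; [apply is_lim_seq_INR|discriminate].
Qed.

Lemma is_lim_seq_inv_pow_INR_S k : is_lim_seq (fun j => / INR (S j) ^ S k) 0.
Proof.
  induction k as [|k IH].
  - apply (is_lim_seq_ext (fun j => / INR (S j))); [intros; simpl; now rewrite Rmult_1_r|].
    apply is_lim_seq_inv_INR_S.
  - apply (is_lim_seq_ext (fun j => / INR (S j) * / INR (S j) ^ S k)).
    { intros j; rewrite <- Rinv_mult; reflexivity. }
    replace (Finite 0) with (Rbar_mult 0 0) by (simpl; f_equal; ring).
    apply is_lim_seq_mult'; [apply is_lim_seq_inv_INR_S|exact IH].
Qed.

Lemma is_lim_seq_INR_S_half : is_lim_seq (fun N => INR (S N) + / 2) p_infty.
Proof.
  apply (is_lim_seq_incr_1 (fun N => INR N + / 2)).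
  eapply is_lim_seq_plus; [apply is_lim_seq_INR|apply is_lim_seq_const|reflexivity].
Qed.

Lemma INR_S_half_pos N : 0 < INR (S N) + / 2.
Proof. pose proof (INR_S_pos N); lra. Qed.

Lemma is_series_telescoping_inv_INR_S :
  is_series (fun j => / INR (S j) - / INR (S (S j))) 1.
Proof.
  assert (Hsum : forall N, sum_n (fun j => / INR (S j) - / INR (S (S j))) N = 1 - / INR (S (S N))).
  { induction N as [|N IH]; [rewrite sum_O; simpl; field|].
    rewrite sum_Sn, IH; unfold plus; simpl; ring. }
  apply is_series_iff_is_lim_seq, (is_lim_seq_ext _ _ _ (fun N => eq_sym (Hsum N))).
  replace (Finite 1) with (Rbar_minus 1 0) by (simpl; f_equal; ring).
  apply is_lim_seq_minus'; [apply is_lim_seq_const|].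
  apply (is_lim_seq_incr_1 (fun j => / INR (S j))), is_lim_seq_inv_INR_S.
Qed.

Lemma inv_pow_INR_S_le j e : (2 <= e)%nat -> / INR (S j) ^ e <= / INR (S j) ^ 2.
Proof.
  intros He; assert (1 <= INR (S j)) by (apply (le_INR 1); lia).
  apply Rinv_le_contravar; [apply pow_lt; lra|apply Rle_pow; assumption].
Qed.

(* Comparison with [2 (1/(j+1) - 1/(j+2))]. *)
Lemma ex_series_inv_sqr_INR_S : ex_series (fun j => / INR (S j) ^ 2).
Proof.
  apply (ex_series_Rle _ (fun j => 2 * (/ INR (S j) - / INR (S (S j))))).
  - intros j; rewrite !S_INR; pose proof (pos_INR j) as Hj; set (x := INR j) in *.
    rewrite Rabs_pos_eq by (apply Rlt_le, Rinv_0_lt_compat, pow_lt; lra).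
    assert (E : 2 * (/ (x + 1) - / (x + 1 + 1)) - / (x + 1) ^ 2 = x / ((x + 1) ^ 2 * (x + 2)))
      by (field; lra).
    assert (0 <= x / ((x + 1) ^ 2 * (x + 2))).
    { apply Rdiv_le_0_compat; [exact Hj|apply Rmult_lt_0_compat; [apply pow_lt|]; lra]. }
    lra.
  - exists (2 * 1); apply is_series_Rscal, is_series_telescoping_inv_INR_S.
Qed.

Lemma ex_series_dominated_inv_sqr (u : nat -> R) K :
  (forall j, Rabs (u j) <= K / INR (S j) ^ 2) -> ex_series u.
Proof.
  intros Hu; apply (ex_series_Rle _ (fun j => K * / INR (S j) ^ 2)); [exact Hu|].
  destruct ex_series_inv_sqr_INR_S as [l Hl]; exists (K * l); apply is_series_Rscal, Hl.
Qed.

Lemma ex_series_inv_pow_INR_S e : (2 <= e)%nat -> ex_series (fun j => / INR (S j) ^ e).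
Proof.
  intros He; apply (ex_series_dominated_inv_sqr _ 1); intros j.
  rewrite Rabs_pos_eq by (apply Rlt_le, Rinv_0_lt_compat, pow_lt, INR_S_pos).
  unfold Rdiv; rewrite Rmult_1_l; apply inv_pow_INR_S_le, He.
Qed.

Lemma ex_series_bounded_inv_pow (c : nat -> R) e : (2 <= e)%nat ->
  (forall j, Rabs (c j) <= 1) -> ex_series (fun j => c j / INR (S j) ^ e).
Proof.
  intros He Hc; apply (ex_series_dominated_inv_sqr _ 1); intros j.
  unfold Rdiv; rewrite Rabs_mult, Rmult_1_l.
  rewrite (Rabs_pos_eq (/ _)) by (apply Rlt_le, Rinv_0_lt_compat, pow_lt, INR_S_pos).
  apply (Rle_trans _ (1 * / INR (S j) ^ e)).
  - apply Rmult_le_compat_r; [apply Rlt_le, Rinv_0_lt_compat, pow_lt, INR_S_pos|apply Hc].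
  - rewrite Rmult_1_l; apply inv_pow_INR_S_le, He.
Qed.

Lemma ex_series_ReLi k s : (2 <= k)%nat -> ex_series (fun j => cos (INR (S j) * s) / INR (S j) ^ k).
Proof. intros Hk; apply ex_series_bounded_inv_pow; [exact Hk|intros; apply Rabs_le, COS_bound]. Qed.

Lemma ex_series_ImLi k s : (2 <= k)%nat -> ex_series (fun j => sin (INR (S j) * s) / INR (S j) ^ k).
Proof. intros Hk; apply ex_series_bounded_inv_pow; [exact Hk|intros; apply Rabs_le, SIN_bound]. Qed.

Lemma div_succ_cases n d : (0 < d)%nat ->
  (S n mod d = 0 /\ S n / d = S (n / d))%nat \/ (S n mod d <> 0 /\ S n / d = n / d)%nat.
Proof.
  intros Hd; pose proof (Nat.div_mod_eq n d) as E.
  pose proof (Nat.mod_upper_bound n d ltac:(lia)) as Hr.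
  set (q := (n / d)%nat) in *; set (r := (n mod d)%nat) in *.
  destruct (Nat.eq_dec (S r) d) as [Hrd|Hrd]; [left|right]; split.
  - symmetry; apply (Nat.mod_unique _ _ (S q)); lia.
  - symmetry; apply (Nat.div_unique _ _ _ 0); lia.
  - assert (S r = S n mod d) by (apply (Nat.mod_unique _ _ q); lia); lia.
  - symmetry; apply (Nat.div_unique _ _ _ (S r)); lia.
Qed.

Lemma is_series_sparse (d : nat) (u b : nat -> R) (l : R) : (0 < d)%nat ->
  (forall j, (S j mod d <> 0)%nat -> u j = 0) ->
  (forall i, u (d * S i - 1)%nat = b i) -> is_series b l -> is_series u l.
Proof.
  intros Hd Hz Hb Hl.
  assert (Hpartial : forall N,
    sum_n u N = match (S N / d)%nat with O => 0 | S q => sum_n b q end).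
  { induction N as [|N IH].
    - rewrite sum_O; destruct (div_succ_cases 0 d Hd) as [[H1 H2]|[H1 H2]];
        rewrite H2, Nat.Div0.div_0_l.
      + assert (d = 1)%nat by (destruct d as [|[|d]]; [lia|reflexivity|rewrite Nat.mod_small in H1; lia]).
        subst d; rewrite sum_O, <- Hb; reflexivity.
      + apply Hz, H1.
    - rewrite sum_Sn, IH; unfold plus; simpl.
      pose proof (Nat.div_mod_eq (S (S N)) d) as E.
      destruct (div_succ_cases (S N) d Hd) as [[H1 H2]|[H1 H2]]; rewrite H2.
      + rewrite H1, H2 in E; destruct (S N / d)%nat as [|q] eqn:Eq.
        * rewrite sum_O, <- Hb, Rplus_0_l; f_equal; lia.
        * rewrite sum_Sn, <- Hb; unfold plus; simpl; do 2 f_equal; lia.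
      + rewrite (Hz (S N) H1); ring. }
  apply is_series_iff_is_lim_seq, (is_lim_seq_ext_loc (fun N => sum_n b (S N / d - 1)%nat)).
  - exists d; intros N HN; rewrite Hpartial.
    assert (1 <= S N / d)%nat by (apply Nat.div_le_lower_bound; lia).
    destruct (S N / d)%nat as [|q]; [lia|f_equal; lia].
  - apply (is_lim_seq_subseq (sum_n b) l (fun N => (S N / d - 1)%nat)); [|exact Hl].
    intros P [N0 HN0]; exists (d * S N0)%nat; intros n Hn; apply HN0.
    assert (S N0 <= S n / d)%nat by (apply Nat.div_le_lower_bound; lia); lia.
Qed.

(** * Rational spans *)

Definition rational (x : R) : Prop := exists q : Q, x = Q2R q.

Lemma rational_0 : rational 0.
Proof. exists 0%Q; now rewrite RMicromega.Q2R_0. Qed.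

Lemma rational_1 : rational 1.
Proof. exists 1%Q; now rewrite RMicromega.Q2R_1. Qed.

Lemma rational_plus x y : rational x -> rational y -> rational (x + y).
Proof. intros [p ->] [q ->]; exists (p + q)%Q; now rewrite Q2R_plus. Qed.

Lemma rational_mult x y : rational x -> rational y -> rational (x * y).
Proof. intros [p ->] [q ->]; exists (p * q)%Q; now rewrite Q2R_mult. Qed.

Lemma rational_opp x : rational x -> rational (- x).
Proof. intros [p ->]; exists (- p)%Q; now rewrite Q2R_opp. Qed.

Lemma rational_minus x y : rational x -> rational y -> rational (x - y).
Proof. intros; apply rational_plus, rational_opp; assumption. Qed.

Lemma rational_inv x : rational x -> rational (/ x).
Proof.
  intros [p ->]; destruct (Qeq_dec p 0) as [Hp|Hp].
  - rewrite (Qeq_eqR _ _ Hp), RMicromega.Q2R_0, Rinv_0; apply rational_0.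
  - exists (/ p)%Q; now rewrite Q2R_inv.
Qed.

Lemma rational_div x y : rational x -> rational y -> rational (x / y).
Proof. intros; apply rational_mult, rational_inv; assumption. Qed.

Lemma rational_INR n : rational (INR n).
Proof.
  induction n as [|n IH]; [apply rational_0|].
  rewrite S_INR; apply rational_plus; [exact IH|apply rational_1].
Qed.

Lemma rational_pow x n : rational x -> rational (x ^ n).
Proof. intros Hx; induction n; [apply rational_1|apply rational_mult; assumption]. Qed.

Record Q_subspace (V : R -> Prop) : Prop := {
  Q_subspace_0 : V 0;
  Q_subspace_plus : forall x y, V x -> V y -> V (x + y);
  Q_subspace_scal : forall r x, rational r -> V x -> V (r * x) }.

Section Q_subspace_theory.

Variable V : R -> Prop.
Hypothesis HV : Q_subspace V.

Lemma Q_subspace_opp x : V x -> V (- x).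
Proof.
  intros Hx; replace (- x) with (-1 * x) by ring.
  apply (Q_subspace_scal _ HV); [apply rational_opp, rational_1|exact Hx].
Qed.

Lemma Q_subspace_minus x y : V x -> V y -> V (x - y).
Proof. intros; apply (Q_subspace_plus _ HV), Q_subspace_opp; assumption. Qed.

Lemma Q_subspace_unscal r x : rational r -> r <> 0 -> V (r * x) -> V x.
Proof.
  intros Hr Hr0 Hx; replace x with (/ r * (r * x)) by (field; exact Hr0).
  apply (Q_subspace_scal _ HV); [apply rational_inv|]; assumption.
Qed.

End Q_subspace_theory.

Definition pi3 : R := PI / 3.

Lemma pi3_pos : 0 < pi3.
Proof. unfold pi3; generalize PI_RGT_0; lra. Qed.

Lemma pi3_lt_2 : pi3 < 2.
Proof. unfold pi3; generalize PI_4; lra. Qed.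

Lemma pi3_lt_PI : pi3 < PI.
Proof. unfold pi3; generalize PI_RGT_0; lra. Qed.

Definition SLs_span (k : nat) (x : R) : Prop :=
  exists c : nat -> Q, x = sum_n_m (fun k1 => Q2R (c k1) * PI ^ (k - k1) * SLs1 k1) 2 k.

Definition pi_span (k : nat) (x : R) : Prop := exists r, rational r /\ x = r * PI ^ k.

(* Odd weights such as [zeta (2 j + 1)] go to [SLs_span], even ones to [pi_span]. *)
Definition weight_span (odd : bool) (k : nat) : R -> Prop :=
  if odd then SLs_span k else pi_span k.

Lemma SLs_span_Q_subspace k : Q_subspace (SLs_span k).
Proof.
  split.
  - exists (fun _ => 0%Q); rewrite <- (sum_n_m_R0 2 k).
    apply sum_n_m_ext; intros; rewrite RMicromega.Q2R_0; simpl; ring.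
  - intros x y [c ->] [d ->]; exists (fun i => (c i + d i)%Q).
    rewrite <- sum_n_m_Rplus; apply sum_n_m_ext; intros; rewrite Q2R_plus; simpl; ring.
  - intros r x [q ->] [c ->]; exists (fun i => (q * c i)%Q).
    rewrite <- sum_n_m_Rmult_l; apply sum_n_m_ext; intros; rewrite Q2R_mult; simpl; ring.
Qed.

Lemma pi_span_Q_subspace k : Q_subspace (pi_span k).
Proof.
  split.
  - exists 0; split; [apply rational_0|ring].
  - intros x y [r [Hr ->]] [s [Hs ->]]; exists (r + s); split; [apply rational_plus; assumption|ring].
  - intros r x Hr [s [Hs ->]]; exists (r * s); split; [apply rational_mult; assumption|ring].
Qed.

Lemma weight_span_Q_subspace odd k : Q_subspace (weight_span odd k).
Proof. destruct odd; [apply SLs_span_Q_subspace|apply pi_span_Q_subspace]. Qed.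

Lemma SLs_span_SLs1 k : (2 <= k)%nat -> SLs_span k (SLs1 k).
Proof.
  intros Hk; exists (fun i => if Nat.eqb i k then 1%Q else 0%Q).
  destruct k as [|[|k]]; try lia.
  rewrite (sum_n_m_Chasles _ 2 (S k) (S (S k))), sum_n_n by lia.
  rewrite Nat.eqb_refl, RMicromega.Q2R_1, Nat.sub_diag.
  rewrite (sum_n_m_ext_loc _ (fun _ => 0)), sum_n_m_R0.
  - unfold plus; simpl; ring.
  - intros i Hi; replace (Nat.eqb i (S (S k))) with false by (symmetry; apply Nat.eqb_neq; lia).
    rewrite RMicromega.Q2R_0; simpl; ring.
Qed.

Lemma SLs_span_mul_PI_pow k i x : SLs_span k x -> SLs_span (k + i) (PI ^ i * x).
Proof.
  intros [c ->]; destruct (Compare_dec.le_lt_dec k 1) as [Hk|Hk].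
  - rewrite sum_n_m_zero by lia; unfold zero; simpl; rewrite Rmult_0_r.
    apply (Q_subspace_0 _ (SLs_span_Q_subspace _)).
  - exists (fun j => if Nat.leb j k then c j else 0%Q).
    rewrite (sum_n_m_Chasles _ 2 k (k + i)) by lia.
    rewrite (sum_n_m_ext_loc _ (fun _ => 0) (S k)), sum_n_m_R0.
    2: { intros j Hj; replace (Nat.leb j k) with false by (symmetry; apply Nat.leb_gt; lia).
         rewrite RMicromega.Q2R_0; simpl; ring. }
    unfold plus; simpl; rewrite Rplus_0_r, <- sum_n_m_Rmult_l.
    apply sum_n_m_ext_loc; intros j Hj.
    replace (Nat.leb j k) with true by (symmetry; apply Nat.leb_le; lia).
    replace (k + i - j)%nat with (i + (k - j))%nat by lia.
    rewrite pow_add; simpl; ring.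
Qed.

Lemma weight_span_mul_PI_pow odd k i x :
  weight_span odd k x -> weight_span odd (k + i) (PI ^ i * x).
Proof.
  destruct odd; simpl; [apply SLs_span_mul_PI_pow|].
  intros [r [Hr ->]]; exists r; split; [exact Hr|rewrite pow_add; ring].
Qed.

Lemma weight_span_mul_opp_pi3_pow odd k i x :
  weight_span odd k x -> weight_span odd (k + i) ((- pi3) ^ i * x).
Proof.
  intros Hx; replace ((- pi3) ^ i * x) with ((- / 3) ^ i * (PI ^ i * x)).
  - apply (Q_subspace_scal _ (weight_span_Q_subspace _ _)).
    + apply rational_pow, rational_opp, rational_inv.
      replace 3 with (INR 3) by (simpl; ring); apply rational_INR.
    + apply weight_span_mul_PI_pow; exact Hx.
  - unfold pi3; rewrite <- Rmult_assoc, <- Rpow_mult_distr; f_equal; f_equal; field.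
Qed.

(** * [zeta] and [Re Li_k (pi / 3)] *)

Definition zeta (k : nat) : R := Series (fun j => / INR (S j) ^ k).

(* The negative of Dirichlet's eta function. *)
Definition alt_zeta (k : nat) : R := Series (fun j => (-1) ^ S j / INR (S j) ^ k).

Lemma ex_series_alt_zeta k : (1 <= k)%nat -> ex_series (fun j => (-1) ^ S j / INR (S j) ^ k).
Proof.
  intros Hk; destruct (alternated_series (fun j => / INR (S j) ^ k)) as [l Hl].
  - intros n; apply Rinv_le_contravar; [apply pow_lt, INR_S_pos|].
    apply pow_incr; split; [apply Rlt_le, INR_S_pos|apply le_INR; lia].
  - apply is_lim_seq_Reals; destruct k as [|k]; [lia|apply is_lim_seq_inv_pow_INR_S].
  - exists (- l).
    apply (is_series_ext (fun n => opp (tg_alt (fun j => / INR (S j) ^ k) n))).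
    + intros n; unfold tg_alt, opp; simpl; unfold Rdiv; ring.
    + apply (is_series_opp _ l), is_series_iff_is_lim_seq.
      apply (is_lim_seq_ext (sum_f_R0 (tg_alt (fun j => / INR (S j) ^ k)))).
      * intros N; now rewrite sum_n_Reals.
      * apply is_lim_seq_Reals, Hl.
Qed.

Lemma cos_mul_pi3 m :
  cos (INR m * pi3) = (-1) ^ m * (if Nat.eqb (m mod 3) 0 then 1 else - / 2).
Proof.
  rewrite (Nat.div_mod_eq m 3) at 1 2.
  pose proof (Nat.mod_upper_bound m 3 ltac:(lia)) as Hr.
  generalize (m / 3)%nat (m mod 3) Hr; clear m Hr; intros q r Hr.
  induction q as [|q IH].
  - rewrite Nat.mul_0_r; simpl plus; unfold pi3.
    destruct r as [|[|[|r]]]; try lia; simpl.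
    + rewrite Rmult_0_l, cos_0; ring.
    + rewrite Rmult_1_l, cos_PI3; field.
    + replace ((1 + 1) * (PI / 3)) with (2 * (PI / 3)) by ring.
      rewrite cos_2a_cos, cos_PI3; field.
  - replace (INR (3 * S q + r) * pi3) with (INR (3 * q + r) * pi3 + PI).
    2: { rewrite !plus_INR, !mult_INR, (S_INR q); unfold pi3; simpl; field. }
    rewrite neg_cos, IH; replace (3 * S q + r)%nat with (3 + (3 * q + r))%nat by lia.
    rewrite !pow_add; ring.
Qed.

Lemma is_series_ReLi_pi3 k : (1 <= k)%nat ->
  is_series (fun j => cos (INR (S j) * pi3) / INR (S j) ^ k)
    ((- / 2 + 3 / 2 * / 3 ^ k) * alt_zeta k).
Proof.
  intros Hk.
  set (v := fun j => if Nat.eqb (S j mod 3) 0 then (-1) ^ S j / INR (S j) ^ k else 0).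
  apply (is_series_Rext (fun j => - / 2 * ((-1) ^ S j / INR (S j) ^ k) + 3 / 2 * v j)).
  { intros j; rewrite cos_mul_pi3; unfold v.
    destruct (Nat.eqb (S j mod 3) 0); field; apply pow_nonzero, INR_S_neq0. }
  replace ((- / 2 + 3 / 2 * / 3 ^ k) * alt_zeta k)
    with (- / 2 * alt_zeta k + 3 / 2 * (/ 3 ^ k * alt_zeta k)) by ring.
  apply is_series_Rplus, is_series_Rscal; [apply is_series_Rscal, Series_correct, ex_series_alt_zeta, Hk|].
  apply (is_series_sparse 3 v (fun i => / 3 ^ k * ((-1) ^ S i / INR (S i) ^ k))); [lia| | |].
  - intros j Hj; unfold v; apply Nat.eqb_neq in Hj; now rewrite Hj.
  - intros i; unfold v; replace (S (3 * S i - 1)) with (S i * 3)%nat by lia.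
    rewrite Nat.Div0.mod_mul, Nat.mul_comm, pow_mult, mult_INR; simpl Nat.eqb; cbv iota.
    replace ((-1) ^ 3) with (-1) by ring; replace (INR 3) with 3 by (simpl; ring).
    rewrite Rpow_mult_distr; field; split; apply pow_nonzero; [apply INR_S_neq0|lra].
  - apply is_series_Rscal, Series_correct, ex_series_alt_zeta, Hk.
Qed.

Lemma alt_zeta_zeta k : (2 <= k)%nat -> alt_zeta k = (2 / 2 ^ k - 1) * zeta k.
Proof.
  intros Hk.
  assert (Hsum : is_series (fun j => / INR (S j) ^ k + (-1) ^ S j / INR (S j) ^ k)
                   (zeta k + alt_zeta k)).
  { apply is_series_Rplus; apply Series_correct;
      [apply ex_series_inv_pow_INR_S|apply ex_series_alt_zeta]; lia. }
  assert (Heven : is_series (fun j => / INR (S j) ^ k + (-1) ^ S j / INR (S j) ^ k)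
                    (2 / 2 ^ k * zeta k)).
  { apply (is_series_sparse 2 _ (fun i => 2 / 2 ^ k * / INR (S i) ^ k)); [lia| | |].
    - intros j Hj; rewrite (Nat.div_mod_eq (S j) 2) at 2.
      replace (S j mod 2)%nat with 1%nat by (pose proof (Nat.mod_upper_bound (S j) 2); lia).
      rewrite pow_add, pow_mult; replace ((-1) ^ 2) with 1 by ring; rewrite pow1.
      field; apply pow_nonzero, INR_S_neq0.
    - intros i; replace (S (2 * S i - 1)) with (2 * S i)%nat by lia.
      rewrite pow_mult, mult_INR; replace ((-1) ^ 2) with 1 by ring; rewrite pow1.
      replace (INR 2) with 2 by (simpl; ring); rewrite Rpow_mult_distr.
      field; split; apply pow_nonzero; [apply INR_S_neq0|lra].
    - apply is_series_Rscal, Series_correct, ex_series_inv_pow_INR_S; lia. }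
  pose proof (is_series_unique _ _ Hsum); pose proof (is_series_unique _ _ Heven); lra.
Qed.

Definition ReLi_pi3_ratio (k : nat) : R := (2 / 2 ^ k - 1) * (- / 2 + 3 / 2 * / 3 ^ k).

Lemma ReLi_pi3_zeta k : (2 <= k)%nat -> ReLi k pi3 = ReLi_pi3_ratio k * zeta k.
Proof.
  intros Hk; unfold ReLi; rewrite (is_series_unique _ _ (is_series_ReLi_pi3 k ltac:(lia))).
  rewrite alt_zeta_zeta by exact Hk; unfold ReLi_pi3_ratio; ring.
Qed.

Lemma rational_ReLi_pi3_ratio k : rational (ReLi_pi3_ratio k).
Proof.
  assert (H2 : rational 2) by (replace 2 with (INR 2) by (simpl; ring); apply rational_INR).
  assert (H3 : rational 3) by (replace 3 with (INR 3) by (simpl; ring); apply rational_INR).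
  unfold ReLi_pi3_ratio; apply rational_mult.
  - apply rational_minus; [apply rational_div, rational_pow|apply rational_1]; assumption.
  - apply rational_plus; [apply rational_opp, rational_inv, H2|].
    apply rational_mult; [apply rational_div|apply rational_inv, rational_pow]; assumption.
Qed.

Lemma ReLi_pi3_ratio_neq1 k : (2 <= k)%nat -> 1 - ReLi_pi3_ratio k <> 0.
Proof.
  intros Hk; unfold ReLi_pi3_ratio.
  assert (2 ^ k >= 4) by (replace 4 with (2 ^ 2) by ring; apply Rle_ge, Rle_pow; lia || lra).
  assert (3 ^ k >= 9) by (replace 9 with (3 ^ 2) by ring; apply Rle_ge, Rle_pow; lia || lra).
  assert (0 < 2 / 2 ^ k <= / 2).
  { split; [apply Rdiv_lt_0_compat; lra|].
    apply (Rmult_le_reg_r (2 ^ k)); [lra|field_simplify; lra]. }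
  assert (0 < / 3 ^ k <= / 9) by (split; [apply Rinv_0_lt_compat|apply Rinv_le_contravar]; lra).
  nra.
Qed.

Lemma is_series_ReLi1_pi3 : is_series (fun j => cos (INR (S j) * pi3) / INR (S j) ^ 1) 0.
Proof.
  replace 0 with ((- / 2 + 3 / 2 * / 3 ^ 1) * alt_zeta 1) by (simpl; field).
  apply is_series_ReLi_pi3; lia.
Qed.

(** * Trigonometric moments *)

Definition cos_moment (n : nat) (m : R) : R := RInt (fun t => (t - pi3) ^ n * cos (m * t)) 0 pi3.
Definition sin_moment (n : nat) (m : R) : R := RInt (fun t => (t - pi3) ^ n * sin (m * t)) 0 pi3.

Lemma continuous_pow_sub_pi3 n x : continuous (fun t => (t - pi3) ^ n) x.
Proof. apply continuous_of_ex_derive; auto_derive; exact I. Qed.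

Lemma is_derive_pow_sub_pi3 n x :
  is_derive (fun t => (t - pi3) ^ S n) x (INR (S n) * (x - pi3) ^ n).
Proof. auto_derive; [exact I|rewrite Rmult_1_l; reflexivity]. Qed.

Lemma ex_RInt_cos_moment n m : ex_RInt (fun t => (t - pi3) ^ n * cos (m * t)) 0 pi3.
Proof.
  apply ex_RInt_continuous_le; [generalize pi3_pos; lra|intros x _].
  apply continuous_Rmult; [apply continuous_pow_sub_pi3|apply continuous_cos_scal].
Qed.

Lemma ex_RInt_sin_moment n m : ex_RInt (fun t => (t - pi3) ^ n * sin (m * t)) 0 pi3.
Proof.
  apply ex_RInt_continuous_le; [generalize pi3_pos; lra|intros x _].
  apply continuous_Rmult; [apply continuous_pow_sub_pi3|apply continuous_sin_scal].
Qed.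

Lemma cos_moment_0 m : m <> 0 -> cos_moment 0 m = sin (m * pi3) / m.
Proof.
  intros Hm; unfold cos_moment.
  rewrite (RInt_is_derive (fun t => sin (m * t) / m)).
  - rewrite Rmult_0_r, sin_0; field; exact Hm.
  - generalize pi3_pos; lra.
  - intros x _; auto_derive; [exact I|field; exact Hm].
  - intros x _; apply continuous_Rmult; [apply continuous_pow_sub_pi3|apply continuous_cos_scal].
Qed.

Lemma sin_moment_0 m : m <> 0 -> sin_moment 0 m = (1 - cos (m * pi3)) / m.
Proof.
  intros Hm; unfold sin_moment.
  rewrite (RInt_is_derive (fun t => - cos (m * t) / m)).
  - rewrite Rmult_0_r, cos_0; field; exact Hm.
  - generalize pi3_pos; lra.
  - intros x _; auto_derive; [exact I|field; exact Hm].
  - intros x _; apply continuous_Rmult; [apply continuous_pow_sub_pi3|apply continuous_sin_scal].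
Qed.

Lemma cos_moment_S n m : m <> 0 -> cos_moment (S n) m = - (INR (S n) / m) * sin_moment n m.
Proof.
  intros Hm; unfold cos_moment, sin_moment.
  rewrite (RInt_by_parts _ (fun t => INR (S n) * (t - pi3) ^ n) (fun t => sin (m * t) / m)).
  - rewrite Rminus_diag, Rmult_0_r, sin_0, pow_i by lia.
    rewrite (RInt_Rext _ (fun t => INR (S n) / m * ((t - pi3) ^ n * sin (m * t))))
      by (intros; field; exact Hm).
    rewrite RInt_Rscal by apply ex_RInt_sin_moment; unfold Rdiv; ring.
  - generalize pi3_pos; lra.
  - intros x _; apply is_derive_pow_sub_pi3.
  - intros x _; apply is_derive_sin_div, Hm.
  - intros x _; apply continuous_of_ex_derive; auto_derive; exact I.
  - intros x _; apply continuous_cos_scal.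
Qed.

Lemma sin_moment_S n m : m <> 0 ->
  sin_moment (S n) m = (- pi3) ^ S n / m + INR (S n) / m * cos_moment n m.
Proof.
  intros Hm; unfold cos_moment, sin_moment.
  rewrite (RInt_by_parts _ (fun t => INR (S n) * (t - pi3) ^ n) (fun t => - cos (m * t) / m)).
  - rewrite Rminus_diag, Rmult_0_r, cos_0, pow_i by lia.
    rewrite (RInt_Rext _ (fun t => - (INR (S n) / m) * ((t - pi3) ^ n * cos (m * t))))
      by (intros; field; exact Hm).
    rewrite RInt_Rscal by apply ex_RInt_cos_moment.
    replace (0 - pi3) with (- pi3) by ring; field; exact Hm.
  - generalize pi3_pos; lra.
  - intros x _; apply is_derive_pow_sub_pi3.
  - intros x _; apply is_derive_cos_div, Hm.
  - intros x _; apply continuous_of_ex_derive; auto_derive; exact I.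
  - intros x _; apply continuous_sin_scal.
Qed.

Definition cos_moment_seq (n e : nat) (j : nat) : R := cos_moment n (INR (S j)) / INR (S j) ^ e.
Definition sin_moment_seq (n e : nat) (j : nat) : R := sin_moment n (INR (S j)) / INR (S j) ^ e.

Lemma cos_moment_seq_0 e j :
  cos_moment_seq 0 e j = sin (INR (S j) * pi3) / INR (S j) ^ S e.
Proof.
  unfold cos_moment_seq; rewrite cos_moment_0 by apply INR_S_neq0; rewrite <- !tech_pow_Rmult.
  field; split; [apply pow_nonzero|]; apply INR_S_neq0.
Qed.

Lemma sin_moment_seq_0 e j :
  sin_moment_seq 0 e j = / INR (S j) ^ S e - cos (INR (S j) * pi3) / INR (S j) ^ S e.
Proof.
  unfold sin_moment_seq; rewrite sin_moment_0 by apply INR_S_neq0; rewrite <- !tech_pow_Rmult.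
  field; split; [apply pow_nonzero|]; apply INR_S_neq0.
Qed.

Lemma cos_moment_seq_S n e j :
  cos_moment_seq (S n) e j = - INR (S n) * sin_moment_seq n (S e) j.
Proof.
  unfold cos_moment_seq, sin_moment_seq; rewrite cos_moment_S by apply INR_S_neq0; rewrite <- !tech_pow_Rmult.
  field; split; [apply pow_nonzero|]; apply INR_S_neq0.
Qed.

Lemma sin_moment_seq_S n e j : sin_moment_seq (S n) e j =
  (- pi3) ^ S n * / INR (S j) ^ S e + INR (S n) * cos_moment_seq n (S e) j.
Proof.
  unfold cos_moment_seq, sin_moment_seq; rewrite sin_moment_S by apply INR_S_neq0; rewrite <- !tech_pow_Rmult.
  field; split; [apply pow_nonzero|]; apply INR_S_neq0.
Qed.

Lemma ex_series_moment_seq n e : (1 <= e)%nat ->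
  ex_series (cos_moment_seq n e) /\ ex_series (sin_moment_seq n e).
Proof.
  revert e; induction n as [|n IH]; intros e He.
  - split.
    + apply (ex_series_ext _ _ (fun j => eq_sym (cos_moment_seq_0 e j))), ex_series_ImLi; lia.
    + apply (ex_series_ext _ _ (fun j => eq_sym (sin_moment_seq_0 e j))).
      apply (ex_series_minus (V := R_NormedModule));
        [apply ex_series_inv_pow_INR_S|apply ex_series_ReLi]; lia.
  - destruct (IH (S e) ltac:(lia)) as [HC HS]; split.
    + apply (ex_series_ext _ _ (fun j => eq_sym (cos_moment_seq_S n e j))).
      apply (ex_series_scal_l (V := R_NormedModule)), HS.
    + apply (ex_series_ext _ _ (fun j => eq_sym (sin_moment_seq_S n e j))).
      apply (ex_series_plus (V := R_NormedModule)); apply (ex_series_scal_l (V := R_NormedModule));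
        [apply ex_series_inv_pow_INR_S; lia|exact HC].
Qed.

Lemma Series_cos_moment_seq_0 e : Series (cos_moment_seq 0 e) = ImLi (S e) pi3.
Proof. apply Series_ext, cos_moment_seq_0. Qed.

Lemma Series_sin_moment_seq_0 e : (1 <= e)%nat ->
  Series (sin_moment_seq 0 e) = zeta (S e) - ReLi (S e) pi3.
Proof.
  intros He; rewrite (Series_ext _ _ (sin_moment_seq_0 e)).
  rewrite (Series_minus (fun j => / INR (S j) ^ S e) (fun j => cos (INR (S j) * pi3) / INR (S j) ^ S e));
    [unfold zeta, ReLi; reflexivity|apply ex_series_inv_pow_INR_S|apply ex_series_ReLi]; lia.
Qed.

Lemma Series_cos_moment_seq_S n e :
  Series (cos_moment_seq (S n) e) = - INR (S n) * Series (sin_moment_seq n (S e)).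
Proof. rewrite (Series_ext _ _ (cos_moment_seq_S n e)); exact (Series_scal_l _ _). Qed.

Lemma Series_sin_moment_seq_S n e : (1 <= e)%nat -> Series (sin_moment_seq (S n) e) =
  (- pi3) ^ S n * zeta (S e) + INR (S n) * Series (cos_moment_seq n (S e)).
Proof.
  intros He; rewrite (Series_ext _ _ (sin_moment_seq_S n e)).
  rewrite (Series_plus (fun j => (- pi3) ^ S n * / INR (S j) ^ S e)
             (fun j => INR (S n) * cos_moment_seq n (S e) j)).
  rewrite (Series_scal_l ((- pi3) ^ S n)), (Series_scal_l (INR (S n))).
  - unfold zeta; reflexivity.
  - apply (ex_series_scal_l (V := R_NormedModule)), ex_series_inv_pow_INR_S; lia.
  - apply (ex_series_scal_l (V := R_NormedModule)), (ex_series_moment_seq n (S e)); lia.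
Qed.

(** * Summation against the Dirichlet kernel *)

Definition sinc (u : R) : R := if Req_EM_T u 0 then 1 else sin u / u.

Lemma sinc_neq0_eq u : u <> 0 -> sinc u = sin u / u.
Proof. intros Hu; unfold sinc; destruct (Req_EM_T u 0); [contradiction|reflexivity]. Qed.

Lemma continuous_sinc u : continuous sinc u.
Proof.
  destruct (Req_dec u 0) as [->|Hu].
  - apply continuity_pt_filterlim; intros eps Heps.
    destruct (derivable_pt_lim_sin_0 eps Heps) as [del Hdel].
    exists del; split; [apply cond_pos|intros x [[_ Hx0] Hxd]].
    simpl in *; unfold R_dist in *; rewrite Rminus_0_r in Hxd.
    unfold sinc; destruct (Req_EM_T x 0) as [E|E]; [subst x; contradiction|].
    destruct (Req_EM_T 0 0) as [_|E']; [|contradiction].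
    specialize (Hdel x E Hxd); rewrite Rplus_0_l, sin_0, Rminus_0_r in Hdel; exact Hdel.
  - apply (continuous_ext_loc _ (fun y => sin y / y)).
    + assert (Hp : 0 < Rabs u) by (apply Rabs_pos_lt, Hu).
      exists (mkposreal _ Hp); intros y Hy; change (Rabs (y - u) < Rabs u) in Hy.
      destruct (Req_dec y 0) as [->|Hy0]; [rewrite Rminus_0_l, Rabs_Ropp in Hy; lra|].
      symmetry; apply sinc_neq0_eq, Hy0.
    + apply continuous_of_ex_derive; auto_derive; exact Hu.
Qed.

Lemma sinc_pos u : 0 <= u < PI -> 0 < sinc u.
Proof.
  intros Hu; unfold sinc; destruct (Req_EM_T u 0); [lra|].
  apply Rdiv_lt_0_compat; [apply sin_gt_0|]; lra.
Qed.

Fixpoint geom_poly (n : nat) (x y : R) : R :=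
  match n with O => 1 | S n' => x ^ S n' + y * geom_poly n' x y end.

Lemma pow_sub_pow_factor n x y : x ^ S n - y ^ S n = (x - y) * geom_poly n x y.
Proof.
  induction n as [|n IH]; [simpl; ring|].
  change (geom_poly (S n) x y) with (x ^ S n + y * geom_poly n x y).
  replace (x ^ S (S n) - y ^ S (S n)) with (x * x ^ S n - y * x ^ S n + y * (x ^ S n - y ^ S n))
    by (simpl; ring).
  rewrite IH; ring.
Qed.

Lemma continuous_geom_poly n y x : continuous (fun t => geom_poly n (t - pi3) y) x.
Proof.
  induction n as [|n IH]; [apply continuous_const|].
  apply (continuous_plus (V := R_NormedModule));
    [apply continuous_pow_sub_pi3|apply continuous_Rmult; [apply continuous_const|exact IH]].
Qed.

Definition moment_primitive (n : nat) (t : R) : R := ((t - pi3) ^ S n - (- pi3) ^ S n) / INR (S n).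

(* [moment_primitive n t / (2 sin (t / 2))], written so as to be visibly continuous at [0]. *)
Definition dirichlet_weight (n : nat) (t : R) : R :=
  geom_poly n (t - pi3) (- pi3) / INR (S n) / sinc (t / 2).

Lemma moment_primitive_factor n t :
  moment_primitive n t = t * (geom_poly n (t - pi3) (- pi3) / INR (S n)).
Proof.
  unfold moment_primitive; rewrite pow_sub_pow_factor.
  replace (t - pi3 - - pi3) with t by ring; unfold Rdiv; ring.
Qed.

Lemma moment_primitive_0 n : moment_primitive n 0 = 0.
Proof. rewrite moment_primitive_factor; ring. Qed.

Lemma is_derive_moment_primitive n x : is_derive (moment_primitive n) x ((x - pi3) ^ n).
Proof.
  unfold moment_primitive; auto_derive; [exact I|].
  change (match n with 0%nat => 1 | S _ => INR n + 1 end) with (INR (S n)).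
  rewrite Rmult_1_l, Rmult_comm, <- Rmult_assoc, Rinv_l by apply INR_S_neq0.
  apply Rmult_1_l.
Qed.

Lemma continuous_moment_primitive n x : continuous (moment_primitive n) x.
Proof. apply continuous_of_ex_derive; eexists; apply is_derive_moment_primitive. Qed.

Lemma continuous_dirichlet_weight n x : 0 <= x < 2 -> continuous (dirichlet_weight n) x.
Proof.
  intros Hx; unfold dirichlet_weight, Rdiv at 2.
  apply continuous_Rmult; [apply continuous_Rmult; [apply continuous_geom_poly|apply continuous_const]|].
  apply continuous_Rinv_comp.
  - apply (continuous_comp (fun t => t / 2) sinc);
      [apply continuous_of_ex_derive; auto_derive; exact I|apply continuous_sinc].
  - apply Rgt_not_eq, sinc_pos; generalize PI2_1; lra.
Qed.

Lemma dirichlet_weight_mul_sin n t : 0 < t < 2 * PI ->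
  dirichlet_weight n t * (2 * sin (t / 2)) = moment_primitive n t.
Proof.
  intros Ht; rewrite moment_primitive_factor; unfold dirichlet_weight.
  rewrite sinc_neq0_eq by lra.
  assert (0 < sin (t / 2)) by (apply sin_gt_0; lra).
  field; repeat split; try lra; apply INR_S_neq0.
Qed.

Lemma sum_n_sin_dirichlet t N : 2 * sin (t / 2) * sum_n (fun j => sin (INR (S j) * t)) N =
  cos (t / 2) - cos ((INR (S N) + / 2) * t).
Proof.
  assert (Hprod : forall A B, 2 * sin B * sin A = cos (A - B) - cos (A + B))
    by (intros; rewrite cos_minus, cos_plus; ring).
  induction N as [|N IH].
  - rewrite sum_O, Hprod; f_equal; f_equal; simpl; field.
  - rewrite sum_n_Rsucc, Rmult_plus_distr_l, IH, Hprod.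
    replace (INR (S (S N)) * t - t / 2) with ((INR (S N) + / 2) * t) by (rewrite (S_INR (S N)); field).
    replace (INR (S (S N)) * t + t / 2) with ((INR (S (S N)) + / 2) * t) by field; ring.
Qed.

Lemma sum_n_cos_dirichlet t N : 2 * sin (t / 2) * sum_n (fun j => cos (INR (S j) * t)) N =
  sin ((INR (S N) + / 2) * t) - sin (t / 2).
Proof.
  assert (Hprod : forall A B, 2 * sin B * cos A = sin (A + B) - sin (A - B))
    by (intros; rewrite sin_minus, sin_plus; ring).
  induction N as [|N IH].
  - rewrite sum_O, Hprod; f_equal; f_equal; simpl; field.
  - rewrite sum_n_Rsucc, Rmult_plus_distr_l, IH, Hprod.
    replace (INR (S (S N)) * t - t / 2) with ((INR (S N) + / 2) * t) by (rewrite (S_INR (S N)); field).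
    replace (INR (S (S N)) * t + t / 2) with ((INR (S (S N)) + / 2) * t) by field; ring.
Qed.

Lemma is_series_ImLi1_pi3 : is_series (fun j => sin (INR (S j) * pi3) / INR (S j) ^ 1) pi3.
Proof.
  assert (Hpi := pi3_lt_PI); assert (Hpos := pi3_pos).
  set (csc2 := fun t => / (2 * sin (t / 2))).
  assert (Hsin : forall t, pi3 <= t <= PI -> 0 < sin (t / 2)) by (intros; apply sin_gt_0; lra).
  assert (Hcsc : forall t, pi3 <= t <= PI -> continuous csc2 t).
  { intros t Ht; apply continuous_Rinv_comp;
      [apply continuous_of_ex_derive; auto_derive; exact I|specialize (Hsin t Ht); lra]. }
  assert (Hcos : forall j, ex_RInt (fun t => cos (INR (S j) * t)) pi3 PI).
  { intros j; apply ex_RInt_continuous_le; [lra|intros; apply continuous_cos_scal]. }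
  (* Summing [int_pi3^PI cos (m t) dt = - sin (m pi3) / m] with the Dirichlet kernel. *)
  assert (Hpartial : forall N, sum_n (fun j => sin (INR (S j) * pi3) / INR (S j) ^ 1) N =
    pi3 - RInt (fun t => csc2 t * cos ((INR (S N) + / 2) * t + - (PI / 2))) pi3 PI).
  { intros N; transitivity (- RInt (fun t => sum_n (fun j => cos (INR (S j) * t)) N) pi3 PI).
    - rewrite RInt_sum_n by exact Hcos.
      rewrite <- (Rmult_1_l (sum_n (fun j => RInt _ _ _) N)), Ropp_mult_distr_l, <- sum_n_Rmult_l.
      apply sum_n_Rext; intros j.
      rewrite (RInt_is_derive (fun t => sin (INR (S j) * t) / INR (S j))); [| lra | |].
      + rewrite pow_1; replace (INR (S j) * PI) with (IZR (Z.of_nat (S j)) * PI)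
          by now rewrite <- INR_IZR_INZ.
        rewrite (sin_eq_0_1 (IZR (Z.of_nat (S j)) * PI)) by (eexists; reflexivity).
        field; apply INR_S_neq0.
      + intros x _; apply is_derive_sin_div, INR_S_neq0.
      + intros; apply continuous_cos_scal.
    - rewrite (RInt_Rext _ (fun t => csc2 t * cos ((INR (S N) + / 2) * t + - (PI / 2)) - / 2)).
      + rewrite RInt_Rminus, RInt_const; [unfold scal; simpl; unfold mult; simpl; unfold pi3; field| |].
        * apply ex_RInt_continuous_le; [lra|intros; apply continuous_Rmult;
            [apply Hcsc; lra|apply continuous_cos_affine]].
        * apply ex_RInt_const.
      + intros t Ht; rewrite Rmin_left, Rmax_right in Ht by lra.
        assert (Hs := Hsin t ltac:(lra)).
        apply (Rmult_eq_reg_l (2 * sin (t / 2))); [|lra].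
        rewrite sum_n_cos_dirichlet; unfold csc2.
        rewrite cos_plus, cos_neg, sin_neg, cos_PI2, sin_PI2; field; lra. }
  apply is_series_iff_is_lim_seq, (is_lim_seq_ext _ _ _ (fun N => eq_sym (Hpartial N))).
  replace (Finite pi3) with (Finite (pi3 - 0)) by (f_equal; ring).
  apply is_lim_seq_minus'; [apply is_lim_seq_const|].
  apply (Riemann_Lebesgue_cos _ (fun N => INR (S N) + / 2)); [lra|exact Hcsc|
    apply INR_S_half_pos|apply is_lim_seq_INR_S_half].
Qed.

Lemma ex_RInt_moment_primitive_mult n (g : R -> R) :
  (forall x, continuous g x) -> ex_RInt (fun t => moment_primitive n t * g t) 0 pi3.
Proof.
  intros Hg; apply ex_RInt_continuous_le; [generalize pi3_pos; lra|intros x _].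
  apply continuous_Rmult; [apply continuous_moment_primitive|apply Hg].
Qed.

Lemma cos_moment_seq_1_by_parts n j : cos_moment_seq n 1 j =
  moment_primitive n pi3 * (cos (INR (S j) * pi3) / INR (S j) ^ 1)
  + RInt (fun t => moment_primitive n t * sin (INR (S j) * t)) 0 pi3.
Proof.
  unfold cos_moment_seq, cos_moment; set (m := INR (S j)).
  assert (Hm : m <> 0) by apply INR_S_neq0.
  assert (E := RInt_by_parts (moment_primitive n) (fun t => (t - pi3) ^ n)
    (fun t => cos (m * t)) (fun t => - m * sin (m * t)) 0 pi3 (Rlt_le _ _ pi3_pos)
    (fun x _ => is_derive_moment_primitive n x)
    (fun x _ => ltac:(auto_derive; [exact I|ring]))
    (fun x _ => continuous_pow_sub_pi3 n x)
    (fun x _ => continuous_Rmult _ _ x (continuous_const _ x) (continuous_sin_scal m x))).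
  rewrite (RInt_Rext _ (fun t => - m * (moment_primitive n t * sin (m * t)))) in E
    by (intros; ring).
  rewrite RInt_Rscal, moment_primitive_0 in E
    by (apply ex_RInt_moment_primitive_mult; intros; apply continuous_sin_scal).
  rewrite pow_1; apply (Rmult_eq_reg_l m); [|exact Hm].
  field_simplify; [lra|exact Hm|exact Hm].
Qed.

Lemma sin_moment_seq_1_by_parts n j : sin_moment_seq n 1 j =
  moment_primitive n pi3 * (sin (INR (S j) * pi3) / INR (S j) ^ 1)
  - RInt (fun t => moment_primitive n t * cos (INR (S j) * t)) 0 pi3.
Proof.
  unfold sin_moment_seq, sin_moment; set (m := INR (S j)).
  assert (Hm : m <> 0) by apply INR_S_neq0.
  assert (E := RInt_by_parts (moment_primitive n) (fun t => (t - pi3) ^ n)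
    (fun t => sin (m * t)) (fun t => m * cos (m * t)) 0 pi3 (Rlt_le _ _ pi3_pos)
    (fun x _ => is_derive_moment_primitive n x)
    (fun x _ => ltac:(auto_derive; [exact I|ring]))
    (fun x _ => continuous_pow_sub_pi3 n x)
    (fun x _ => continuous_Rmult _ _ x (continuous_const _ x) (continuous_cos_scal m x))).
  rewrite (RInt_Rext _ (fun t => m * (moment_primitive n t * cos (m * t)))) in E
    by (intros; ring).
  rewrite RInt_Rscal, moment_primitive_0 in E
    by (apply ex_RInt_moment_primitive_mult; intros; apply continuous_cos_scal).
  rewrite pow_1; apply (Rmult_eq_reg_l m); [|exact Hm].
  field_simplify; [lra|exact Hm|exact Hm].
Qed.

Lemma ex_RInt_dirichlet_weight_cos n M phi :
  ex_RInt (fun t => dirichlet_weight n t * cos (M * t + phi)) 0 pi3.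
Proof.
  apply ex_RInt_continuous_le; [generalize pi3_pos; lra|intros x Hx].
  apply continuous_Rmult; [|apply continuous_cos_affine].
  apply continuous_dirichlet_weight; generalize pi3_lt_2; lra.
Qed.

Lemma is_series_cos_moment_seq_1 n :
  is_series (cos_moment_seq n 1) (RInt (fun t => dirichlet_weight n t * cos (t / 2)) 0 pi3).
Proof.
  assert (Hpos := pi3_pos); assert (Hlt := pi3_lt_2).
  assert (Hpartial : forall N, sum_n (cos_moment_seq n 1) N =
    moment_primitive n pi3 * sum_n (fun j => cos (INR (S j) * pi3) / INR (S j) ^ 1) N
    + (RInt (fun t => dirichlet_weight n t * cos (/ 2 * t + 0)) 0 pi3
       - RInt (fun t => dirichlet_weight n t * cos ((INR (S N) + / 2) * t + 0)) 0 pi3)).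
  { intros N; rewrite (sum_n_Rext _ _ N (cos_moment_seq_1_by_parts n)), sum_n_Rplus, sum_n_Rmult_l.
    f_equal; rewrite <- RInt_sum_n
      by (intros; apply ex_RInt_moment_primitive_mult; intros; apply continuous_sin_scal).
    rewrite <- RInt_Rminus by apply ex_RInt_dirichlet_weight_cos.
    apply RInt_Rext; intros t Ht; rewrite Rmin_left, Rmax_right in Ht by lra.
    rewrite sum_n_Rmult_l, <- (dirichlet_weight_mul_sin n t) by (generalize PI2_1; lra).
    rewrite Rmult_assoc, sum_n_sin_dirichlet, !Rplus_0_r.
    replace (/ 2 * t) with (t / 2) by field; ring. }
  apply is_series_iff_is_lim_seq, (is_lim_seq_ext _ _ _ (fun N => eq_sym (Hpartial N))).
  replace (RInt (fun t => dirichlet_weight n t * cos (t / 2)) 0 pi3) with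
    (moment_primitive n pi3 * 0 + (RInt (fun t => dirichlet_weight n t * cos (/ 2 * t + 0)) 0 pi3 - 0)).
  2: { rewrite Rmult_0_r, Rplus_0_l, Rminus_0_r; apply RInt_Rext; intros.
       do 2 f_equal; field. }
  apply is_lim_seq_plus'.
  - apply (is_lim_seq_scal_l _ _ 0), is_series_iff_is_lim_seq, is_series_ReLi1_pi3.
  - apply is_lim_seq_minus'; [apply is_lim_seq_const|].
    apply (Riemann_Lebesgue_cos _ (fun N => INR (S N) + / 2));
      [lra| |apply INR_S_half_pos|apply is_lim_seq_INR_S_half].
    intros x Hx; apply continuous_dirichlet_weight; lra.
Qed.

Lemma is_series_sin_moment_seq_1 n : is_series (sin_moment_seq n 1)
  (moment_primitive n pi3 * pi3 + / 2 * RInt (moment_primitive n) 0 pi3).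
Proof.
  assert (Hpos := pi3_pos); assert (Hlt := pi3_lt_2).
  assert (HP : ex_RInt (moment_primitive n) 0 pi3)
    by (apply ex_RInt_continuous_le; [lra|intros; apply continuous_moment_primitive]).
  assert (Hint : forall N,
    RInt (fun t => sum_n (fun j => moment_primitive n t * cos (INR (S j) * t)) N) 0 pi3 =
    RInt (fun t => dirichlet_weight n t * cos ((INR (S N) + / 2) * t + - (PI / 2))) 0 pi3
    - / 2 * RInt (moment_primitive n) 0 pi3).
  { intros N; rewrite <- (RInt_Rscal _ _ _ _ HP).
    rewrite <- RInt_Rminus;
      [|apply ex_RInt_dirichlet_weight_cos
       |exact (ex_RInt_scal (V := R_NormedModule) (moment_primitive n) 0 pi3 (/ 2) HP)].
    apply RInt_Rext; intros t Ht; rewrite Rmin_left, Rmax_right in Ht by lra.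
    rewrite sum_n_Rmult_l, <- (dirichlet_weight_mul_sin n t) by (generalize PI2_1; lra).
    rewrite Rmult_assoc, sum_n_cos_dirichlet, cos_plus, cos_neg, sin_neg, cos_PI2, sin_PI2; field. }
  assert (Hpartial : forall N, sum_n (sin_moment_seq n 1) N =
    moment_primitive n pi3 * sum_n (fun j => sin (INR (S j) * pi3) / INR (S j) ^ 1) N
    - (RInt (fun t => dirichlet_weight n t * cos ((INR (S N) + / 2) * t + - (PI / 2))) 0 pi3
       - / 2 * RInt (moment_primitive n) 0 pi3)).
  { intros N; rewrite (sum_n_Rext _ _ N (sin_moment_seq_1_by_parts n)), sum_n_Rminus, sum_n_Rmult_l.
    rewrite <- RInt_sum_n, Hint
      by (intros; apply ex_RInt_moment_primitive_mult; intros; apply continuous_cos_scal).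
    reflexivity. }
  apply is_series_iff_is_lim_seq, (is_lim_seq_ext _ _ _ (fun N => eq_sym (Hpartial N))).
  replace (moment_primitive n pi3 * pi3 + / 2 * RInt (moment_primitive n) 0 pi3)
    with (moment_primitive n pi3 * pi3 - (0 - / 2 * RInt (moment_primitive n) 0 pi3)) by ring.
  apply is_lim_seq_minus'.
  - apply (is_lim_seq_scal_l _ _ pi3), is_series_iff_is_lim_seq, is_series_ImLi1_pi3.
  - apply is_lim_seq_minus'; [|apply is_lim_seq_const].
    apply (Riemann_Lebesgue_cos _ (fun N => INR (S N) + / 2));
      [lra| |apply INR_S_half_pos|apply is_lim_seq_INR_S_half].
    intros x Hx; apply continuous_dirichlet_weight; lra.
Qed.

(** * The log-sine integral *)

Lemma ln_lt_self z : 0 < z -> ln z < z.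
Proof.
  intros Hz; apply exp_lt_inv; rewrite exp_ln by exact Hz.
  destruct (Req_dec z 0) as [->|Hz0]; [lra|pose proof (exp_ineq1 z Hz0); lra].
Qed.

Lemma two_sin_half_bounds x : 0 < x <= 1 -> x / 2 <= 2 * sin (x / 2) <= 1.
Proof.
  intros Hx; split.
  - destruct (sin_bound (x / 2) 0 ltac:(lra) ltac:(generalize PI2_1; lra)) as [H _].
    unfold sin_approx, sin_term in H; simpl in H.
    assert (x * x * x <= x) by (assert (x * x <= 1) by nra; nra).
    nra.
  - pose proof (sin_lt_x (x / 2) ltac:(lra)); lra.
Qed.

(* [|x ln x| <= 2 sqrt x] comes from [ln (1 / sqrt x) < 1 / sqrt x]. *)
Lemma abs_mul_Afun_le x : 0 < x <= 1 -> Rabs (x * Afun x) <= 3 * sqrt x.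
Proof.
  intros Hx; destruct (two_sin_half_bounds x Hx) as [Hlo Hhi].
  unfold Afun; rewrite (Rabs_pos_eq (2 * _)) by lra.
  assert (L1 : ln (2 * sin (x / 2)) <= 0) by (rewrite <- ln_1; apply ln_le; lra).
  assert (L2 : ln (x / 2) <= ln (2 * sin (x / 2))) by (apply ln_le; lra).
  rewrite ln_div in L2 by lra.
  assert (Hs : 0 < sqrt x) by (apply sqrt_lt_R0; lra).
  assert (Hxx : x = sqrt x * sqrt x) by (rewrite sqrt_sqrt; lra).
  assert (Hsqrt : ln (sqrt x) = ln x / 2).
  { rewrite Hxx at 2; rewrite ln_mult by exact Hs; field. }
  assert (Hz := ln_lt_self (/ sqrt x) ltac:(apply Rinv_0_lt_compat, Hs)).
  rewrite ln_Rinv, Hsqrt in Hz by exact Hs.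
  assert (Hxs : x <= sqrt x).
  { assert (sqrt x <= 1) by (rewrite <- sqrt_1; apply sqrt_le_1_alt; lra).
    rewrite Hxx at 1; nra. }
  assert (Hm : x * - ln x <= 2 * sqrt x).
  { apply (Rle_trans _ (x * (2 / sqrt x))).
    - apply Rmult_le_compat_l; [lra|unfold Rdiv; lra].
    - rewrite Hxx at 1; apply Req_le; field; lra. }
  rewrite Rabs_mult, Rabs_pos_eq, Rabs_left1 by lra.
  assert (ln 2 < 1).
  { apply exp_lt_inv; rewrite exp_ln by lra; pose proof (exp_ineq1 1); lra. }
  pose proof ln_lt_2.
  apply (Rle_trans _ (x * (ln 2 - ln x))); [apply Rmult_le_compat_l; lra|nra].
Qed.

Lemma Afun_pi3 : Afun pi3 = 0.
Proof.
  unfold Afun, pi3; replace (PI / 3 / 2) with (PI / 6) by field.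
  rewrite sin_PI6; replace (2 * (1 / 2)) with 1 by field; rewrite Rabs_R1; apply ln_1.
Qed.

Lemma two_sin_half_pos y : 0 < y < 2 -> 0 < 2 * sin (y / 2).
Proof. intros Hy; assert (0 < sin (y / 2)) by (apply sin_gt_0; generalize PI2_1; lra); lra. Qed.

Lemma locally_in_0_2 (y : R) : 0 < y < 2 -> locally y (fun z => 0 < z < 2).
Proof.
  intros Hy; assert (Hp : 0 < Rmin y (2 - y)) by (apply Rmin_pos; lra).
  exists (mkposreal _ Hp); intros z Hz; change (Rabs (z - y) < Rmin y (2 - y)) in Hz.
  pose proof (Rmin_l y (2 - y)); pose proof (Rmin_r y (2 - y)).
  apply Rabs_lt_between in Hz; lra.
Qed.

Section Log_sine_antiderivative.

Variable n : nat.

Let w (t : R) : R := dirichlet_weight n t * cos (t / 2).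

Lemma continuous_dirichlet_weight_cos_half x : 0 <= x < 2 -> continuous w x.
Proof.
  intros Hx; apply continuous_Rmult; [apply continuous_dirichlet_weight, Hx|].
  apply continuous_of_ex_derive; auto_derive; exact I.
Qed.

(* Integration by parts of [(t - pi3) ^ n * Afun t], with [Afun' t = cos (t / 2) / (2 sin (t / 2))]. *)
Definition log_sine_antideriv (t : R) : R := moment_primitive n t * Afun t - RInt w 0 t.

Lemma is_derive_log_sine_antideriv y : 0 < y < 2 ->
  is_derive log_sine_antideriv y ((y - pi3) ^ n * Afun y).
Proof.
  intros Hy; pose proof (two_sin_half_pos y Hy) as Hs.
  assert (HA : is_derive (fun t => moment_primitive n t * Afun t) y
                 ((y - pi3) ^ n * Afun y + moment_primitive n y * (cos (y / 2) / (2 * sin (y / 2))))).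
  { apply (is_derive_mult (moment_primitive n) Afun); [apply is_derive_moment_primitive| |
      intros; apply Rmult_comm].
    unfold Afun; auto_derive; [repeat split; try lra; apply Rabs_pos_lt; lra|].
    rewrite sign_eq_1, Rabs_pos_eq by (unfold Rdiv in *; lra); unfold Rdiv in *; field; lra. }
  assert (Hw : is_derive (fun x => RInt w 0 x) y (w y)).
  { apply (is_derive_RInt (V := R_NormedModule) w _ 0 y).
    - apply (filter_imp (fun z => 0 < z < 2)); [|apply locally_in_0_2, Hy].
      intros z Hz; apply (RInt_correct (V := R_CompleteNormedModule)).
      apply ex_RInt_continuous_le; [lra|intros; apply continuous_dirichlet_weight_cos_half; lra].
    - apply continuous_dirichlet_weight_cos_half; lra. }
  replace ((y - pi3) ^ n * Afun y) with
    (((y - pi3) ^ n * Afun y + moment_primitive n y * (cos (y / 2) / (2 * sin (y / 2)))) - w y).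
  - apply (is_derive_minus (K := R_AbsRing) (V := R_NormedModule) _ _ y _ _ HA Hw).
  - unfold w; rewrite <- (dirichlet_weight_mul_sin n y) by (generalize PI2_1; lra); field; lra.
Qed.

Lemma continuous_log_sine_integrand z : 0 < z < 2 -> continuous (fun t => (t - pi3) ^ n * Afun t) z.
Proof.
  intros Hz; pose proof (two_sin_half_pos z Hz); apply continuous_of_ex_derive.
  unfold Afun; auto_derive; repeat split; try lra; apply Rabs_pos_lt; unfold Rdiv in *; lra.
Qed.

Lemma log_sine_antideriv_bound :
  exists K, forall x, 0 < x <= Rmin 1 pi3 -> Rabs (log_sine_antideriv x) <= K * sqrt x.
Proof.
  assert (Hpos := pi3_pos); assert (Hlt := pi3_lt_2).
  destruct (continuous_bounded (fun t => geom_poly n (t - pi3) (- pi3) / INR (S n)) 0 pi3)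
    as [Bf HBf]; [lra|intros; apply continuous_Rmult;
      [apply continuous_geom_poly|apply continuous_const]|].
  destruct (continuous_bounded w 0 pi3) as [Bw HBw];
    [lra|intros; apply continuous_dirichlet_weight_cos_half; lra|].
  exists (3 * Bf + Bw); intros x Hx.
  pose proof (Rmin_l 1 pi3); pose proof (Rmin_r 1 pi3).
  assert (Hsqrt : x <= sqrt x).
  { assert (sqrt x <= 1) by (rewrite <- sqrt_1; apply sqrt_le_1_alt; lra).
    rewrite <- (sqrt_sqrt x) at 1 by lra; pose proof (sqrt_pos x); nra. }
  assert (H1 : Rabs (moment_primitive n x * Afun x) <= Bf * (3 * sqrt x)).
  { rewrite moment_primitive_factor.
    replace (x * (geom_poly n (x - pi3) (- pi3) / INR (S n)) * Afun x)
      with (geom_poly n (x - pi3) (- pi3) / INR (S n) * (x * Afun x)) by ring.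
    rewrite Rabs_mult; apply Rmult_le_compat; try apply Rabs_pos;
      [apply HBf|apply abs_mul_Afun_le]; lra. }
  assert (H2 : Rabs (RInt w 0 x) <= (x - 0) * Bw).
  { apply abs_RInt_le_const; [lra| |intros; apply HBw; lra].
    apply ex_RInt_continuous_le; [lra|intros; apply continuous_dirichlet_weight_cos_half; lra]. }
  assert (0 <= Bw) by (eapply Rle_trans; [apply Rabs_pos|apply (HBw 0)]; lra).
  unfold log_sine_antideriv; eapply Rle_trans; [apply Rabs_triang|rewrite Rabs_Ropp].
  assert ((x - 0) * Bw <= sqrt x * Bw) by (apply Rmult_le_compat_r; lra).
  lra.
Qed.

Lemma log_sine_antideriv_lim_0 : filterlim log_sine_antideriv (at_right 0) (locally 0).
Proof.
  destruct log_sine_antideriv_bound as [K HK].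
  assert (HK0 : 0 <= K).
  { specialize (HK (Rmin 1 pi3)); pose proof pi3_pos.
    assert (0 < Rmin 1 pi3) by (apply Rmin_pos; lra).
    assert (0 < sqrt (Rmin 1 pi3)) by (apply sqrt_lt_R0; lra).
    assert (Rabs (log_sine_antideriv (Rmin 1 pi3)) <= K * sqrt (Rmin 1 pi3)) by (apply HK; lra).
    pose proof (Rabs_pos (log_sine_antideriv (Rmin 1 pi3))); nra. }
  intros P [eps Heps]; set (c := eps / (K + 1)).
  assert (Hc : 0 < c) by (apply Rdiv_lt_0_compat; [apply cond_pos|lra]).
  assert (Hd : 0 < Rmin (Rmin 1 pi3) (c * c))
    by (repeat apply Rmin_pos; generalize pi3_pos; nra).
  exists (mkposreal _ Hd); intros x Hx Hx0; apply Heps.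
  change (Rabs (x - 0) < Rmin (Rmin 1 pi3) (c * c)) in Hx.
  rewrite Rminus_0_r, Rabs_pos_eq in Hx by lra.
  pose proof (Rmin_l (Rmin 1 pi3) (c * c)); pose proof (Rmin_r (Rmin 1 pi3) (c * c)).
  assert (Hs : sqrt x < c) by (rewrite <- (sqrt_square c) by lra; apply sqrt_lt_1; nra).
  change (Rabs (log_sine_antideriv x - 0) < eps); rewrite Rminus_0_r.
  apply (Rle_lt_trans _ (K * sqrt x)); [apply HK; lra|].
  apply (Rle_lt_trans _ (K * c)); [apply Rmult_le_compat_l; lra|].
  unfold c; apply (Rmult_lt_reg_r (K + 1)); [lra|].
  field_simplify; [pose proof (cond_pos eps); nra|lra].
Qed.

Lemma SLs1_eq_dirichlet : SLs1 (n + 2) = - RInt w 0 pi3.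
Proof.
  assert (Hpos := pi3_pos); assert (Hlt := pi3_lt_2).
  assert (Hnear : forall P : R * R -> Prop, (forall x, 0 < x < pi3 -> P (x, pi3)) ->
    filter_prod (at_right 0) (at_point pi3) P).
  { intros P HP; apply (Filter_prod _ _ _ (fun x => 0 < x < pi3) (fun y => y = pi3)).
    - exists (mkposreal _ Hpos); intros y Hy Hy0; change (Rabs (y - 0) < pi3) in Hy.
      rewrite Rminus_0_r in Hy; apply Rabs_lt_between in Hy; simpl; lra.
    - reflexivity.
    - intros x y Hx ->; apply HP, Hx. }
  unfold SLs1; replace (n + 2 - 2)%nat with n by lia; fold pi3.
  apply is_RInt_gen_unique, (is_RInt_gen_ext (Derive log_sine_antideriv)).
  - apply Hnear; intros x Hx z Hz; simpl in Hz; rewrite Rmin_left, Rmax_right in Hz by lra.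
    apply is_derive_unique, is_derive_log_sine_antideriv; lra.
  - replace (- RInt w 0 pi3) with (log_sine_antideriv pi3 - 0)
      by (unfold log_sine_antideriv; rewrite Afun_pi3; ring).
    apply is_RInt_gen_Derive.
    + apply Hnear; intros x Hx z Hz; simpl in Hz; rewrite Rmin_left, Rmax_right in Hz by lra.
      eexists; apply is_derive_log_sine_antideriv; lra.
    + apply Hnear; intros x Hx z Hz; simpl in Hz; rewrite Rmin_left, Rmax_right in Hz by lra.
      apply (continuous_ext_loc _ (fun t => (t - pi3) ^ n * Afun t));
        [|apply continuous_log_sine_integrand; lra].
      apply (filter_imp (fun u => 0 < u < 2)); [|apply locally_in_0_2; lra].
      intros u Hu; symmetry; apply is_derive_unique, is_derive_log_sine_antideriv, Hu.
    + apply log_sine_antideriv_lim_0.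
    + intros P HP; apply (locally_singleton _ _ HP).
Qed.

End Log_sine_antiderivative.

Lemma SLs_span_cos_moment_series n : SLs_span (n + 2) (Series (cos_moment_seq n 1)).
Proof.
  rewrite (is_series_unique _ _ (is_series_cos_moment_seq_1 n)).
  replace (RInt _ 0 pi3) with (- SLs1 (n + 2)) by (rewrite SLs1_eq_dirichlet; ring).
  apply (Q_subspace_opp _ (SLs_span_Q_subspace _)), SLs_span_SLs1; lia.
Qed.

Lemma pi_span_sin_moment_series n : pi_span (n + 2) (Series (sin_moment_seq n 1)).
Proof.
  assert (Hpos := pi3_pos).
  rewrite (is_series_unique _ _ (is_series_sin_moment_seq_1 n)).
  rewrite (RInt_is_derive
    (fun t => ((t - pi3) ^ S (S n) / INR (S (S n)) - (- pi3) ^ S n * t) / INR (S n)));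
    [|lra| |intros; apply continuous_moment_primitive].
  - set (r := / INR (S n) + / (2 * INR (S (S n)))).
    match goal with |- pi_span _ ?x => replace x with ((- pi3) ^ (n + 2) * r) end.
    + apply (weight_span_mul_opp_pi3_pow false 0 (n + 2)); exists r; split; [|simpl; ring].
      unfold r; apply rational_plus; [apply rational_inv, rational_INR|].
      apply rational_inv, rational_mult; [replace 2 with (INR 2) by (simpl; ring)|]; apply rational_INR.
    + unfold r, moment_primitive; rewrite Rminus_diag.
      replace (0 - pi3) with (- pi3) by ring; replace (n + 2)%nat with (S (S n)) by lia.
      rewrite <- !tech_pow_Rmult, (S_INR (S n)); pose proof (INR_S_pos n).
      field; lra.
  - intros x _; unfold moment_primitive; auto_derive; [exact I|].
    change (match n with 0%nat => 1 | S _ => INR n + 1 end) with (INR (S n)).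
    rewrite <- S_INR, <- !tech_pow_Rmult; unfold Rminus; field; split; apply INR_S_neq0.
Qed.

(** * Induction on the weight *)

(* The weight-[k] combination of polylogarithms that a moment series isolates. *)
Definition leading_Li (even : bool) (k : nat) : R :=
  if even then ImLi k pi3 else zeta k - ReLi k pi3.

Definition leading_term (odd : bool) (k : nat) (x y : R) : Prop :=
  exists q, rational q /\ q <> 0 /\ weight_span odd k (x - q * y).

Section Leading_term.

Variables (odd : bool) (k : nat).

Lemma leading_term_refl y : leading_term odd k y y.
Proof.
  exists 1; split; [apply rational_1|split; [lra|]].
  rewrite Rmult_1_l, Rminus_diag; apply (Q_subspace_0 _ (weight_span_Q_subspace _ _)).
Qed.

Lemma leading_term_scal r x y : rational r -> r <> 0 ->
  leading_term odd k x y -> leading_term odd k (r * x) y.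
Proof.
  intros Hr Hr0 [q [Hq [Hq0 Hx]]]; exists (r * q).
  split; [apply rational_mult; assumption|split; [apply Rmult_integral_contrapositive; tauto|]].
  replace (r * x - r * q * y) with (r * (x - q * y)) by ring.
  apply (Q_subspace_scal _ (weight_span_Q_subspace _ _)); assumption.
Qed.

Lemma leading_term_add z x y : weight_span odd k z ->
  leading_term odd k x y -> leading_term odd k (z + x) y.
Proof.
  intros Hz [q [Hq [Hq0 Hx]]]; exists q; split; [exact Hq|split; [exact Hq0|]].
  replace (z + x - q * y) with (z + (x - q * y)) by ring.
  apply (Q_subspace_plus _ (weight_span_Q_subspace _ _)); assumption.
Qed.

Lemma leading_term_span x y : weight_span odd k x -> leading_term odd k x y -> weight_span odd k y.
Proof.
  intros Hx [q [Hq [Hq0 Hxy]]].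
  apply (Q_subspace_unscal _ (weight_span_Q_subspace _ _) q); [exact Hq|exact Hq0|].
  replace (q * y) with (x - (x - q * y)) by ring.
  apply (Q_subspace_minus _ (weight_span_Q_subspace _ _)); assumption.
Qed.

End Leading_term.

Definition zeta_in_span_below (k : nat) : Prop :=
  forall w, (2 <= w < k)%nat -> weight_span (Nat.odd w) w (zeta w).

(* Each integration by parts lowers [n] and raises [e]; the boundary terms
   [(- pi3) ^ j * zeta (w)] have smaller [zeta] weight [w]. *)
Lemma moment_series_leading_term n : forall e, (1 <= e)%nat -> zeta_in_span_below (n + e + 1) ->
  leading_term (Nat.odd e) (n + e + 1) (Series (cos_moment_seq n e)) (leading_Li (Nat.even n) (n + e + 1)) /\
  leading_term (Nat.even e) (n + e + 1) (Series (sin_moment_seq n e)) (leading_Li (Nat.odd n) (n + e + 1)).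
Proof.
  induction n as [|n IH]; intros e He Hzeta.
  - replace (0 + e + 1)%nat with (S e) by lia.
    rewrite Series_cos_moment_seq_0, Series_sin_moment_seq_0 by exact He.
    split; apply leading_term_refl.
  - replace (S n + e + 1)%nat with (n + S e + 1)%nat in * by lia.
    destruct (IH (S e) ltac:(lia) Hzeta) as [HC HS].
    rewrite Nat.odd_succ in HC; rewrite Nat.even_succ in HS.
    rewrite Nat.even_succ, Nat.odd_succ, Series_cos_moment_seq_S, Series_sin_moment_seq_S by exact He.
    split.
    + apply leading_term_scal; [apply rational_opp, rational_INR|apply Ropp_neq_0_compat, INR_S_neq0|exact HS].
    + apply leading_term_add; [|apply leading_term_scal; [apply rational_INR|apply INR_S_neq0|exact HC]].
      replace (n + S e + 1)%nat with (S e + S n)%nat by lia.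
      apply weight_span_mul_opp_pi3_pow; rewrite <- Nat.odd_succ; apply Hzeta; lia.
Qed.

Lemma leading_Li_span k : (2 <= k)%nat -> zeta_in_span_below k ->
  SLs_span k (leading_Li (Nat.even k) k) /\ pi_span k (leading_Li (Nat.odd k) k).
Proof.
  intros Hk Hzeta; set (n := (k - 2)%nat); replace k with (n + 1 + 1)%nat in * by (unfold n; lia).
  destruct (moment_series_leading_term n 1 ltac:(lia) Hzeta) as [HC HS].
  replace (n + 1 + 1)%nat with (n + 2)%nat in * by lia.
  replace (Nat.even (n + 2)) with (Nat.even n) by (rewrite Nat.even_add; destruct (Nat.even n); reflexivity).
  replace (Nat.odd (n + 2)) with (Nat.odd n) by (rewrite Nat.odd_add; destruct (Nat.odd n); reflexivity).
  split; [apply (leading_term_span true _ _ _ (SLs_span_cos_moment_series n) HC)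
         |apply (leading_term_span false _ _ _ (pi_span_sin_moment_series n) HS)].
Qed.

Lemma leading_Li_false k : (2 <= k)%nat -> leading_Li false k = (1 - ReLi_pi3_ratio k) * zeta k.
Proof. intros Hk; unfold leading_Li; rewrite ReLi_pi3_zeta by exact Hk; ring. Qed.

Lemma zeta_weight_span k : (2 <= k)%nat -> weight_span (Nat.odd k) k (zeta k).
Proof.
  induction k as [k IH] using (well_founded_induction Wf_nat.lt_wf); intros Hk.
  destruct (leading_Li_span k Hk) as [HC HS]; [intros w Hw; apply IH; lia|].
  rewrite <- Nat.negb_even in *; destruct (Nat.even k); cbn [negb] in *;
    [rewrite leading_Li_false in HS by exact Hk|rewrite leading_Li_false in HC by exact Hk];
    (eapply Q_subspace_unscal;
      [apply weight_span_Q_subspace|apply rational_minus; [apply rational_1|apply rational_ReLi_pi3_ratio]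
      |apply ReLi_pi3_ratio_neq1, Hk|eassumption]).
Qed.

Lemma Cl_Gl_pi3_span k : (2 <= k)%nat -> SLs_span k (Cl k pi3) /\ pi_span k (Gl k pi3).
Proof.
  intros Hk; destruct (leading_Li_span k Hk) as [HC HS]; [intros w Hw; apply zeta_weight_span; lia|].
  pose proof (zeta_weight_span k Hk) as Hz.
  unfold Cl, Gl; rewrite ReLi_pi3_zeta by exact Hk.
  rewrite <- Nat.negb_even in *; destruct (Nat.even k); cbn [negb] in *; split; try assumption;
    apply (Q_subspace_scal _ (weight_span_Q_subspace _ _) _ _ (rational_ReLi_pi3_ratio k) Hz).
Qed.

Theorem theorem6 (k : nat) (hk : (1 <= k)%nat) :
  (exists c : nat -> Q,
      Cl k (PI / 3) =
      sum_n_m (fun k1 : nat => Q2R (c k1) * PI ^ (k - k1) * SLs1 k1) 2 k)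
  /\ (exists q : Q, Gl k (PI / 3) = Q2R q * PI ^ k).
Proof.
  fold pi3; destruct (Nat.eq_dec k 1) as [->|Hk1].
  - unfold Cl, Gl, ReLi, ImLi; simpl Nat.even; cbv iota; split.
    + exists (fun _ => 0%Q); rewrite (is_series_unique _ _ is_series_ReLi1_pi3).
      rewrite sum_n_m_zero by lia; reflexivity.
    + exists (1 # 3)%Q; rewrite (is_series_unique _ _ is_series_ImLi1_pi3).
      unfold Q2R, pi3; simpl; field.
  - destruct (Cl_Gl_pi3_span k ltac:(lia)) as [HCl [r [[q ->] HGl]]].
    split; [exact HCl|exists q; exact HGl].
Qed.
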